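(* Let $(n,m)\in\{(3,3),(4,3),(5,3),(3,4),(3,5)\}$. Then $H_1(\mathcal{N}_n(\sigma_1^m);\mathbb{Z})$ is torsion free of finite rank, namely free abelian of rank $4$ if $(n,m)=(3,3)$, rank $6$ if $(n,m)=(3,4)$, rank $12$ if $(n,m)=(3,5)$, rank $12$ if $(n,m)=(4,3)$, and rank $40$ if $(n,m)=(5,3)$.
   Context: $B_n$ denotes the Artin braid group with standard generators $\sigma_1,\dots,\sigma_{n-1}$ (relations $\sigma_i\sigma_j=\sigma_j\sigma_i$ for $|i-j|>1$ and $\sigma_i\sigma_j\sigma_i=\sigma_j\sigma_i\sigma_j$ for $|i-j|=1$), and $\mathcal{N}_n(\sigma_1^m)$ denotes the normal closure of $\sigma_1^m$ in $B_n$. $H_1(G;\mathbb{Z})$ is the abelianization of $G$. *)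

(* Braid groups given by their standard presentation,
   elements represented by words modulo the congruence generated by the
   relators. *)
From HB Require Import structures.
From mathcomp Require Import all_boot all_order all_algebra.
From Stdlib Require Import Relations.
Set Implicit Arguments. Unset Strict Implicit. Unset Printing Implicit Defensive.
Import GRing.Theory.
Local Open Scope ring_scope.

(* A letter (i, true) is sigma_{i+1}, (i, false) is sigma_{i+1}^{-1};
   so sigma_1 is index 0, and B_n uses indices 0 .. n-2. *)
Definition letter := (nat * bool)%type.
Definition word := seq letter.

Definition valid_word (n : nat) (w : word) : bool :=
  all (fun x : letter => (x.1 < n.-1)%N) w.

Definition inv_word (w : word) : word :=
  rev (map (fun x : letter => (x.1, ~~ x.2)) w).

Inductive braid_rel (n : nat) : word -> word -> Prop :=
| br_free i b : (i < n.-1)%N -> braid_rel n [:: (i, b); (i, ~~ b)] [::]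
| br_comm i j : (i.+1 < j)%N -> (j < n.-1)%N ->
    braid_rel n [:: (i, true); (j, true)] [:: (j, true); (i, true)]
| br_braid i : (i.+1 < n.-1)%N ->
    braid_rel n [:: (i, true); (i.+1, true); (i, true)]
                [:: (i.+1, true); (i, true); (i.+1, true)].

Inductive braid_step (n : nat) : word -> word -> Prop :=
| bs_rel u v l r : braid_rel n l r -> braid_step n (u ++ l ++ v) (u ++ r ++ v).

Definition braid_eq (n : nat) : word -> word -> Prop :=
  clos_refl_sym_trans word (braid_step n).

Definition sigma1_pow (m : nat) (b : bool) : word := nseq m (0%N, b).

Definition in_normal_closure (n m : nat) (w : word) : Prop :=
  valid_word n w /\
  exists gs : seq (word * bool),
    all (fun p => valid_word n p.1) gs /\
    braid_eq n w (flatten [seq p.1 ++ sigma1_pow m p.2 ++ inv_word p.1 | p <- gs]).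

Definition in_commutator_of_normal_closure (n m : nat) (w : word) : Prop :=
  valid_word n w /\
  exists abs : seq (word * word),
    (forall p, p \in abs -> in_normal_closure n m p.1 /\ in_normal_closure n m p.2) /\
    braid_eq n w (flatten [seq p.1 ++ p.2 ++ inv_word p.1 ++ inv_word p.2 | p <- abs]).

(* H_1(N_n(sigma_1^m); Z) = N / [N, N] is free abelian of rank r:
   there is a surjective group homomorphism N -> Z^r whose kernel is [N, N]
   (first isomorphism theorem). *)
Definition H1_normal_closure_free_of_rank (n m r : nat) : Prop :=
  exists phi : word -> 'rV[int]_r,
    (forall w1 w2, in_normal_closure n m w1 -> in_normal_closure n m w2 ->
       braid_eq n w1 w2 -> phi w1 = phi w2) /\
    (forall w1 w2, in_normal_closure n m w1 -> in_normal_closure n m w2 ->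
       phi (w1 ++ w2) = phi w1 + phi w2) /\
    (forall v : 'rV[int]_r, exists w, in_normal_closure n m w /\ phi w = v) /\
    (forall w, in_normal_closure n m w ->
       (phi w = 0 <-> in_commutator_of_normal_closure n m w)).

(* Write x = sigma_1^m and N for its normal closure in B_n.  In each case a
   certificate provides a transitive action of B_n on {0, ..., r-1} in which
   x acts trivially, and a crossed homomorphism d : B_n -> Z^r for the
   permutation module with d(x) = L e_0, L <> 0.  On N the action is trivial,
   so d restricts to a homomorphism N -> Z^r sending g x g^-1 to L e_(g.0);
   thus d / L maps N onto Z^r and kills [N, N].  Conversely, the certificate
   shows that the stabiliser of 0 commutes with x modulo [N, N], by writing
   each of its Schreier generators as a product of relators, conjugates of x,
   words commuting with sigma_1 and earlier generators.  Hence g x g^-1 is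
   congruent to t_y x t_y^-1 modulo [N, N] for the transversal element t_y
   with y = g.0, and an element of N on which d vanishes is a product of such
   conjugates with exponents summing to zero at each point, which cancel in
   pairs modulo [N, N]. *)

From mathcomp Require Import all_boot all_order all_algebra.
From Stdlib Require Import Relations Setoid Morphisms.
From mathcomp Require Import zify.
Set Implicit Arguments. Unset Strict Implicit. Unset Printing Implicit Defensive.
Import GRing.Theory Num.Theory.

Definition inv_letter (l : letter) : letter := (l.1, ~~ l.2).

Lemma inv_word_cons l w : inv_word (l :: w) = inv_word w ++ [:: inv_letter l].
Proof. by rewrite /inv_word /= rev_cons cats1. Qed.

Lemma inv_word_cat u v : inv_word (u ++ v) = inv_word v ++ inv_word u.
Proof. by rewrite /inv_word map_cat rev_cat. Qed.

Lemma inv_wordK : involutive inv_word.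
Proof.
by elim=> [//|[i b] w IH]; rewrite inv_word_cons inv_word_cat IH /inv_word /= negbK.
Qed.

Lemma valid_word_cat n u v : valid_word n (u ++ v) = valid_word n u && valid_word n v.
Proof. exact: all_cat. Qed.

Lemma valid_inv_word n w : valid_word n (inv_word w) = valid_word n w.
Proof. by rewrite /valid_word /inv_word all_rev all_map. Qed.

Definition valid_wordE := (valid_word_cat, valid_inv_word).

Definition commutator (a b : word) : word := a ++ b ++ inv_word a ++ inv_word b.

#[export] Hint Extern 0 (braid_eq _ _ _) => reflexivity : core.

Section BraidEquality.
Variable n : nat.
Local Notation "u ~= v" := (braid_eq n u v) (at level 70).
Local Notation valid := (valid_word n).

#[export] Instance braid_eq_Equivalence : Equivalence (braid_eq n).
Proof. by split; [exact: rst_refl | exact: rst_sym | exact: rst_trans]. Qed.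

Lemma braid_eq_catl c u v : u ~= v -> c ++ u ~= c ++ v.
Proof.
elim=> [_ _ [a b l r H]|||] *; [|done|by symmetry|by etransitivity; eauto].
by apply: rst_step; have := bs_rel (c ++ a) b H; rewrite -!catA.
Qed.

Lemma braid_eq_catr c u v : u ~= v -> u ++ c ~= v ++ c.
Proof.
elim=> [_ _ [a b l r H]|||] *; [|done|by symmetry|by etransitivity; eauto].
by apply: rst_step; rewrite -!catA; exact: bs_rel.
Qed.

#[export] Instance cat_braid_eq : Proper (braid_eq n ==> braid_eq n ==> braid_eq n) cat.
Proof.
move=> u v Huv u' v' Huv'.
by transitivity (v ++ u'); [exact: braid_eq_catr | exact: braid_eq_catl].
Qed.

#[export] Instance cons_braid_eq l : Proper (braid_eq n ==> braid_eq n) (cons l).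
Proof. by move=> u v; exact: (braid_eq_catl [:: l]). Qed.

Lemma braid_rel_braid_eq l r : braid_rel n l r -> l ~= r.
Proof. by move=> H; apply: rst_step; have := bs_rel [::] [::] H; rewrite /= !cats0. Qed.

Lemma braid_rel_valid l r : braid_rel n l r -> valid l && valid r.
Proof.
case=> [i b lt_i|i j lt_ij lt_j|i lt_i] /=; rewrite ?lt_i ?lt_j //=.
- by rewrite (ltn_trans _ lt_j) // (ltn_trans _ lt_ij).
- by rewrite (ltn_trans _ lt_i).
Qed.

Lemma braid_eq_valid u v : u ~= v -> valid u = valid v.
Proof.
elim=> [_ _ [a b l r /braid_rel_valid /andP[Hl Hr]]|||] //=; last by congruence.
by rewrite !valid_word_cat Hl Hr.
Qed.

Lemma mulKVw_letter l u : l.1 < n.-1 -> l :: inv_letter l :: u ~= u.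
Proof.
case: l => i b /= lt_i.
exact: (braid_eq_catr u (braid_rel_braid_eq (br_free b lt_i))).
Qed.

Lemma mulKVw w u : valid w -> w ++ inv_word w ++ u ~= u.
Proof.
elim: w u => [|l w IH] u; first by [].
move=> /andP[Hl Hw]; rewrite inv_word_cons -catA /= IH //.
exact: mulKVw_letter.
Qed.

Lemma mulKw w u : valid w -> inv_word w ++ w ++ u ~= u.
Proof. by have := @mulKVw (inv_word w) u; rewrite inv_wordK valid_inv_word. Qed.

Lemma mulwV w : valid w -> w ++ inv_word w ~= [::].
Proof. by move=> Hw; rewrite -[_ ++ _]cats0 -catA mulKVw. Qed.

Lemma mulVw w : valid w -> inv_word w ++ w ~= [::].
Proof. by move=> Hw; rewrite -[_ ++ _]cats0 -catA mulKw. Qed.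

Lemma braid_eq_inv u v : u ~= v -> inv_word u ~= inv_word v.
Proof.
elim=> [_ _ [a b l r H]|||] *; [|done|by symmetry|by etransitivity; eauto].
have /andP[Hl Hr] := braid_rel_valid H.
suff Hinv : inv_word l ~= inv_word r by rewrite !inv_word_cat Hinv.
rewrite -[inv_word l]cats0 -(mulKVw [::] Hr).
rewrite -(braid_eq_catr (inv_word r ++ [::]) (braid_rel_braid_eq H)).
by rewrite mulKw //= cats0.
Qed.

#[export] Instance inv_word_braid_eq : Proper (braid_eq n ==> braid_eq n) inv_word.
Proof. by move=> u v; exact: braid_eq_inv. Qed.

Lemma commute_of_commutator u v :
  valid u -> valid v -> commutator u v ~= [::] -> u ++ v ~= v ++ u.
Proof.
rewrite /commutator => Hu Hv H; rewrite -[v ++ u]cat0s -H -!catA mulKw //.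
by rewrite -[inv_word u ++ u]cats0 -catA mulKw // cats0.
Qed.

Lemma commute_nseq u l k : u ++ [:: l] ~= l :: u -> u ++ nseq k l ~= nseq k l ++ u.
Proof.
move=> H; elim: k => [|k IH] /=; first by rewrite cats0.
by rewrite -cat1s catA H -cat1s -catA IH.
Qed.

Lemma braid_rel_mulV l r : braid_rel n l r -> l ++ inv_word r ~= [::].
Proof.
move=> H; have /andP[_ Hr] := braid_rel_valid H.
by rewrite (braid_rel_braid_eq H) mulwV.
Qed.

Definition relator (braid : bool) (i j : nat) : word :=
  if braid then [:: (i, true); (i.+1, true); (i, true)] ++
                inv_word [:: (i.+1, true); (i, true); (i.+1, true)]
  else [:: (i, true); (j, true)] ++ inv_word [:: (j, true); (i, true)].

Definition relator_ok (braid : bool) (i j : nat) : bool :=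
  if braid then i.+1 < n.-1 else (i.+1 < j) && (j < n.-1).

Lemma relator_trivial b i j : relator_ok b i j -> relator b i j ~= [::].
Proof. by case: b => [|/andP[]] *; apply: braid_rel_mulV; constructor. Qed.

Definition braid_relations : seq (word * word) :=
  [seq ([:: (i, b); (i, ~~ b)], [::]) | i <- iota 0 n.-1, b <- [:: true; false]] ++
  [seq ([:: (i, true); (j, true)], [:: (j, true); (i, true)])
     | i <- iota 0 n.-1, j <- iota i.+2 (n.-1 - i.+2)] ++
  [seq ([:: (i, true); (i.+1, true); (i, true)], [:: (i.+1, true); (i, true); (i.+1, true)])
     | i <- iota 0 n.-2].

Lemma braid_relations_complete l r : braid_rel n l r -> (l, r) \in braid_relations.
Proof.
rewrite !mem_cat; case=> [i b lt_i|i j lt_ij lt_j|i lt_i].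
- apply/orP; left; apply/allpairsPdep; exists i, b; rewrite mem_iota lt_i.
  by case: b.
- apply/orP; right; apply/orP; left; apply/allpairsPdep; exists i, j.
  by rewrite !mem_iota; split=> //; lia.
- apply/orP; right; apply/orP; right; apply/mapP; exists i => //.
  by rewrite mem_iota; lia.
Qed.

Definition reduce_letter (l : letter) (w : word) : word :=
  if w is l' :: w' then (if l' == inv_letter l then w' else l :: w) else [:: l].

Definition free_reduce (w : word) : word := foldr reduce_letter [::] w.

Lemma braid_eq_free_reduce w : valid w -> w ~= free_reduce w.
Proof.
elim: w => [|l w IH /andP[Hl Hw]] /=; first by [].
transitivity (l :: free_reduce w); first exact: (braid_eq_catl [:: l] (IH Hw)).
case: (free_reduce w) => [|l' w'] /=; first by [].
by case: eqP => [->|//]; exact: mulKVw_letter.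
Qed.

Lemma free_reduce_braid_eq u v :
  valid u -> valid v -> free_reduce u = free_reduce v -> u ~= v.
Proof. by move=> /braid_eq_free_reduce Hu /braid_eq_free_reduce Hv Huv; rewrite Hu Hv Huv. Qed.

End BraidEquality.

Section GeneratedSubgroup.
Variables (n : nat) (gen : word -> Prop).
Local Notation "u ~= v" := (braid_eq n u v) (at level 70).
Local Notation valid := (valid_word n).

Definition subgroup_gen (w : word) : Prop :=
  valid w /\ exists s : seq word, {in s, forall u, gen u} /\ w ~= flatten s.

Lemma subgroup_gen_valid w : subgroup_gen w -> valid w.
Proof. by case. Qed.

Lemma subgroup_gen_nil : subgroup_gen [::].
Proof. by split=> //; exists [::]. Qed.

Lemma subgroup_gen_mem u : valid u -> gen u -> subgroup_gen u.
Proof.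
by move=> Hu Gu; split=> //; exists [:: u]; rewrite /= cats0; split=> // v /[!inE] /eqP->.
Qed.

Lemma subgroup_gen_braid_eq u v : u ~= v -> subgroup_gen u -> subgroup_gen v.
Proof.
move=> Huv [Hu [s [Gs Hs]]]; split; first by rewrite -(braid_eq_valid Huv).
by exists s; split=> //; rewrite -Huv.
Qed.

#[export] Instance subgroup_gen_Proper : Proper (braid_eq n ==> iff) subgroup_gen.
Proof. by move=> u v Huv; split; apply: subgroup_gen_braid_eq; [|symmetry]. Qed.

Lemma subgroup_gen_cat u v : subgroup_gen u -> subgroup_gen v -> subgroup_gen (u ++ v).
Proof.
move=> [Hu [s [Gs Hs]]] [Hv [t [Gt Ht]]]; split; first by rewrite valid_word_cat Hu Hv.
exists (s ++ t); rewrite flatten_cat Hs Ht; split=> // w /[!mem_cat] /orP[]; auto.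
Qed.

Lemma subgroup_gen_flatten s :
  {in s, forall u, subgroup_gen u} -> subgroup_gen (flatten s).
Proof.
elim: s => [_|u s IH /forall_cons[Hu Hs]] /=; first exact: subgroup_gen_nil.
by apply: subgroup_gen_cat Hu (IH Hs).
Qed.

Lemma subgroup_gen_inv w :
  (forall u, gen u -> subgroup_gen (inv_word u)) ->
  subgroup_gen w -> subgroup_gen (inv_word w).
Proof.
move=> Ginv [Hw [s [Gs Hs]]]; apply: subgroup_gen_braid_eq (braid_eq_inv (symmetry Hs)) _.
elim: s Gs {Hs} => [_|u s IH /forall_cons[Gu Gs]] /=; first exact: subgroup_gen_nil.
by rewrite inv_word_cat; apply: subgroup_gen_cat (IH Gs) (Ginv _ Gu).
Qed.

Lemma subgroup_gen_conj g w : valid g ->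
  (forall u, gen u -> subgroup_gen (g ++ u ++ inv_word g)) ->
  subgroup_gen w -> subgroup_gen (g ++ w ++ inv_word g).
Proof.
move=> Hg Gconj [Hw [s [Gs Hs]]]; rewrite Hs.
elim: s Gs {Hs} => [_|u s IH /forall_cons[Gu Gs]] /=.
  by rewrite mulwV //; exact: subgroup_gen_nil.
have -> : g ++ (u ++ flatten s) ++ inv_word g ~=
          (g ++ u ++ inv_word g) ++ g ++ flatten s ++ inv_word g by rewrite -!catA mulKw.
exact: subgroup_gen_cat (Gconj _ Gu) (IH Gs).
Qed.
End GeneratedSubgroup.

(** * The normal closure of sigma_1^m and its derived subgroup *)

Section SignedCount.
Local Open Scope ring_scope.

Definition bsign (b : bool) : int := if b then 1 else -1.

Definition signed_count (ys : seq (nat * bool)) (y : nat) : int :=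
  \sum_(q <- ys | q.1 == y) bsign q.2.

Lemma signed_count_partner y b ys :
  signed_count ((y, b) :: ys) y = 0 -> (y, ~~ b) \in ys.
Proof.
apply: contra_eqT => Hys; rewrite /signed_count big_cons eqxx.
have : 0 <= bsign b * \sum_(q <- ys | q.1 == y) bsign q.2.
  rewrite mulr_sumr big_seq_cond sumr_ge0 // => [[z c]] /andP[Hzc /eqP /= Ez].
  by move: Hzc Hys; rewrite Ez; case: b; case: c => // ->.
by case: b {Hys} => /=; lia.
Qed.

Lemma abs_mul_bsign (k : int) : (`|k|%N)%:Z * bsign (0 <= k) = k.
Proof. by case: k => k; rewrite /= ?mulr1 // mulrN1 NegzE. Qed.

Lemma signed_count_nseq k z b y :
  signed_count (nseq k (z, b)) y = if z == y then k%:Z * bsign b else 0.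
Proof.
rewrite /signed_count; elim: k => [|k IH]; first by rewrite big_nil; case: eqP; rewrite ?mul0r.
by rewrite big_cons /= IH; case: eqP => //; rewrite intS mulrDl mul1r.
Qed.

Lemma signed_count_flatten s y : signed_count (flatten s) y = \sum_(ys <- s) signed_count ys y.
Proof. exact: big_flatten. Qed.

Lemma signed_count_out (P : pred nat) ys y :
  all (fun q => P q.1) ys -> ~~ P y -> signed_count ys y = 0.
Proof.
move=> /allP Hys Py; apply: big1_seq => q /andP[/eqP Eq /Hys].
by rewrite Eq (negbTE Py).
Qed.

Lemma signed_count_drop_pair y b ys zs z :
  signed_count ((y, b) :: ys ++ (y, ~~ b) :: zs) z = signed_count (ys ++ zs) z.
Proof.
rewrite /signed_count big_cons !big_cat big_cons /=.
by case: eqP => _ //; case: b => /=; lia.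
Qed.

End SignedCount.

Section NormalClosure.
Variables n m : nat.
Hypothesis n_gt1 : 0 < n.-1.
Local Notation "u ~= v" := (braid_eq n u v) (at level 70).
Local Notation valid := (valid_word n).

Lemma inv_sigma1_pow b : inv_word (sigma1_pow m b) = sigma1_pow m (~~ b).
Proof. by rewrite /inv_word /sigma1_pow map_nseq rev_nseq. Qed.

Lemma valid_sigma1_pow b : valid (sigma1_pow m b).
Proof. by rewrite /valid_word all_nseq n_gt1 orbT. Qed.

Definition sigma1_conj (g : word) (b : bool) : word := g ++ sigma1_pow m b ++ inv_word g.

Definition conj_prod (gs : seq (word * bool)) : word :=
  flatten [seq sigma1_conj p.1 p.2 | p <- gs].

Lemma inv_sigma1_conj g b : inv_word (sigma1_conj g b) = sigma1_conj g (~~ b).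
Proof. by rewrite /sigma1_conj !inv_word_cat inv_wordK inv_sigma1_pow catA. Qed.

Definition is_sigma1_conj (u : word) : Prop := exists g b, valid g /\ u = sigma1_conj g b.

Definition nclosure : word -> Prop := subgroup_gen n is_sigma1_conj.

Lemma valid_sigma1_conj g b : valid g -> valid (sigma1_conj g b).
Proof. by move=> Hg; rewrite !valid_wordE Hg valid_sigma1_pow. Qed.

Lemma in_normal_closureE w : in_normal_closure n m w <-> nclosure w.
Proof.
split=> [[Hw [gs [Hgs Hs]]]|[Hw [s [Gs Hs]]]]; split=> //.
  exists [seq sigma1_conj p.1 p.2 | p <- gs]; split=> // _ /mapP[p Hp ->].
  by exists p.1, p.2; split=> //; exact: (allP Hgs).
suff [gs [Hgs Es]] : exists gs : seq (word * bool), all (fun p => valid p.1) gs /\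
    s = [seq sigma1_conj p.1 p.2 | p <- gs] by exists gs; rewrite -Es.
elim: s Gs {Hs} => [_|u s IH /forall_cons[[g [b [Hg ->]]] /IH[gs [Hgs ->]]]].
  by exists [::].
by exists ((g, b) :: gs); rewrite /= Hg.
Qed.

Lemma nclosure_valid w : nclosure w -> valid w.
Proof. exact: subgroup_gen_valid. Qed.

Lemma nclosure_sigma1_conj g b : valid g -> nclosure (sigma1_conj g b).
Proof. by move=> Hg; apply: subgroup_gen_mem; [exact: valid_sigma1_conj | exists g, b]. Qed.

Lemma nclosure_sigma1_pow b : nclosure (sigma1_pow m b).
Proof. by have := @nclosure_sigma1_conj [::] b; rewrite /sigma1_conj cats0; exact. Qed.

Lemma nclosure_cat u v : nclosure u -> nclosure v -> nclosure (u ++ v).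
Proof. exact: subgroup_gen_cat. Qed.

Lemma nclosure_inv w : nclosure w -> nclosure (inv_word w).
Proof.
apply: subgroup_gen_inv => _ [g [b [Hg ->]]].
by rewrite inv_sigma1_conj; exact: nclosure_sigma1_conj.
Qed.

Lemma nclosure_conj g w : valid g -> nclosure w -> nclosure (g ++ w ++ inv_word g).
Proof.
move=> Hg; apply: subgroup_gen_conj => // _ [h [b [Hh ->]]].
have -> : g ++ sigma1_conj h b ++ inv_word g = sigma1_conj (g ++ h) b.
  by rewrite /sigma1_conj inv_word_cat -!catA.
by apply: nclosure_sigma1_conj; rewrite valid_word_cat Hg.
Qed.

Definition is_nclosure_commutator (u : word) : Prop :=
  exists a b, nclosure a /\ nclosure b /\ u = commutator a b.

Definition derived : word -> Prop := subgroup_gen n is_nclosure_commutator.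

Lemma in_commutator_of_normal_closureE w :
  in_commutator_of_normal_closure n m w <-> derived w.
Proof.
split=> [[Hw [abs [Habs Hs]]]|[Hw [s [Gs Hs]]]]; split=> //.
  exists [seq commutator p.1 p.2 | p <- abs]; split=> // _ /mapP[p Hp ->].
  by have [/in_normal_closureE Ha /in_normal_closureE Hb] := Habs p Hp; exists p.1, p.2.
suff [abs [Habs Es]] : exists abs : seq (word * word),
    (forall p, p \in abs -> in_normal_closure n m p.1 /\ in_normal_closure n m p.2) /\
    s = [seq commutator p.1 p.2 | p <- abs] by exists abs; rewrite -Es.
elim: s Gs {Hs} => [_|u s IH /forall_cons[[a [b [Ha [Hb ->]]]] /IH[abs [Habs ->]]]].
  by exists [::].
exists ((a, b) :: abs); split=> // p /[!inE] /orP[/eqP-> | /Habs //].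
by split; apply/in_normal_closureE.
Qed.

#[export] Instance derived_Proper : Proper (braid_eq n ==> iff) derived.
Proof. exact: subgroup_gen_Proper. Qed.

Lemma nclosure_commutator a b : nclosure a -> nclosure b -> nclosure (commutator a b).
Proof. by move=> Ha Hb; do !apply: nclosure_cat => //; exact: nclosure_inv. Qed.

Lemma derived_valid w : derived w -> valid w.
Proof. exact: subgroup_gen_valid. Qed.

Lemma derived_commutator a b : nclosure a -> nclosure b -> derived (commutator a b).
Proof.
move=> Ha Hb; apply: subgroup_gen_mem; last by exists a, b.
by rewrite !valid_wordE (nclosure_valid Ha) (nclosure_valid Hb).
Qed.

Lemma derived_cat u v : derived u -> derived v -> derived (u ++ v).
Proof. exact: subgroup_gen_cat. Qed.

Lemma derived_inv w : derived w -> derived (inv_word w).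
Proof.
apply: subgroup_gen_inv => _ [a [b [Ha [Hb ->]]]].
by rewrite /commutator !inv_word_cat !inv_wordK -!catA; exact: derived_commutator.
Qed.

Lemma derived_conj g w : valid g -> derived w -> derived (g ++ w ++ inv_word g).
Proof.
move=> Hg; apply: subgroup_gen_conj => // _ [a [b [Ha [Hb ->]]]].
have -> : g ++ commutator a b ++ inv_word g ~=
          commutator (g ++ a ++ inv_word g) (g ++ b ++ inv_word g).
  by rewrite /commutator !inv_word_cat !inv_wordK -!catA !mulKw.
by apply: derived_commutator; exact: nclosure_conj.
Qed.

Definition eq_mod_derived (u v : word) : Prop := derived (u ++ inv_word v).
Local Notation "u ≡ v" := (eq_mod_derived u v) (at level 70).

#[export] Instance eq_mod_derived_Proper :
  Proper (braid_eq n ==> braid_eq n ==> iff) eq_mod_derived.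
Proof. by move=> u u' Hu v v' Hv; rewrite /eq_mod_derived Hu Hv. Qed.

Lemma eqd_valid u v : u ≡ v -> valid u /\ valid v.
Proof. by move/derived_valid; rewrite !valid_wordE => /andP[-> ->]. Qed.

Lemma eqd_refl u : valid u -> u ≡ u.
Proof. by move=> Hu; rewrite /eq_mod_derived mulwV //; exact: subgroup_gen_nil. Qed.

Lemma braid_eq_eqd u v : valid u -> u ~= v -> u ≡ v.
Proof. by move=> Hu Huv; rewrite -Huv; exact: eqd_refl. Qed.

Lemma eqd_sym u v : u ≡ v -> v ≡ u.
Proof. by move/derived_inv; rewrite inv_word_cat inv_wordK. Qed.

Lemma eqd_trans v u w : u ≡ v -> v ≡ w -> u ≡ w.
Proof.
move=> Huv Hvw; have [_ Hv] := eqd_valid Huv.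
by have := derived_cat Huv Hvw; rewrite -catA mulKw.
Qed.

Lemma eqd_catl c u v : valid c -> u ≡ v -> c ++ u ≡ c ++ v.
Proof. by move=> Hc /(derived_conj Hc); rewrite /eq_mod_derived inv_word_cat -!catA. Qed.

Lemma eqd_catr c u v : valid c -> u ≡ v -> u ++ c ≡ v ++ c.
Proof. by move=> Hc; rewrite /eq_mod_derived inv_word_cat -catA mulKVw. Qed.

Lemma eqd_cat u v u' v' : u ≡ v -> u' ≡ v' -> u ++ u' ≡ v ++ v'.
Proof.
move=> H H'; have [[_ Hv] [Hu' _]] := (eqd_valid H, eqd_valid H').
exact: eqd_trans (eqd_catr Hu' H) (eqd_catl Hv H').
Qed.

Lemma eqd_derived u v : u ≡ v -> derived v -> derived u.
Proof.
move=> Huv Hv; have := derived_cat Huv Hv.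
by rewrite -catA mulVw ?cats0 //; exact: derived_valid.
Qed.

Lemma eqd_nclosure_comm a b : nclosure a -> nclosure b -> a ++ b ≡ b ++ a.
Proof.
by move=> Ha Hb; rewrite /eq_mod_derived inv_word_cat -catA; exact: derived_commutator.
Qed.

Lemma eqd_commuteV a b : valid a -> a ++ b ≡ b ++ a -> inv_word a ++ b ≡ b ++ inv_word a.
Proof.
move=> Ha H; have Ha' : valid (inv_word a) by rewrite valid_inv_word.
have := eqd_catl Ha' (eqd_catr Ha' H).
by rewrite -!catA mulKw // mulwV // cats0; exact: eqd_sym.
Qed.

Definition centralizes_x (h : word) : Prop := h ++ sigma1_pow m true ≡ sigma1_pow m true ++ h.

Lemma centralizes_x_valid h : centralizes_x h -> valid h.
Proof. by case/eqd_valid; rewrite valid_word_cat => /andP[]. Qed.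

Lemma centralizes_x_pow h b :
  centralizes_x h -> h ++ sigma1_pow m b ≡ sigma1_pow m b ++ h.
Proof.
case: b => // H.
rewrite -[false]/(~~ true) -inv_sigma1_pow; apply/eqd_sym/eqd_commuteV.
  exact: valid_sigma1_pow.
exact: eqd_sym.
Qed.

Lemma centralizes_x_conj h b : centralizes_x h -> sigma1_conj h b ≡ sigma1_pow m b.
Proof.
move=> Hx; have Hh := centralizes_x_valid Hx.
have Hh' : valid (inv_word h) by rewrite valid_inv_word.
rewrite /sigma1_conj catA; apply: eqd_trans (eqd_catr Hh' (centralizes_x_pow b Hx)) _.
by rewrite -catA mulwV // cats0; apply: eqd_refl; exact: valid_sigma1_pow.
Qed.

Lemma centralizes_x_nil : centralizes_x [::].
Proof. by rewrite /centralizes_x cats0; apply: eqd_refl; exact: valid_sigma1_pow. Qed.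

Lemma centralizes_x_braid_eq h h' : h ~= h' -> centralizes_x h -> centralizes_x h'.
Proof. by rewrite /centralizes_x => ->. Qed.

Lemma centralizes_x_cat h h' : centralizes_x h -> centralizes_x h' -> centralizes_x (h ++ h').
Proof.
move=> H H'; have Hh := centralizes_x_valid H.
rewrite /centralizes_x -catA; apply: eqd_trans (eqd_catl Hh H') _.
by rewrite !catA; exact: eqd_catr (centralizes_x_valid H') H.
Qed.

Lemma centralizes_x_inv h : centralizes_x h -> centralizes_x (inv_word h).
Proof. by move=> H; apply: eqd_commuteV => //; exact: centralizes_x_valid. Qed.

Lemma centralizes_x_nclosure h : nclosure h -> centralizes_x h.
Proof. by move=> Hh; apply: eqd_nclosure_comm => //; exact: nclosure_sigma1_pow. Qed.

Lemma centralizes_x_commute c :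
  valid c -> c ++ sigma1_pow m true ~= sigma1_pow m true ++ c -> centralizes_x c.
Proof. by move=> Hc; apply: braid_eq_eqd; rewrite valid_word_cat Hc valid_sigma1_pow. Qed.

Lemma conj_prod_cat gs hs : conj_prod (gs ++ hs) = conj_prod gs ++ conj_prod hs.
Proof. by rewrite /conj_prod map_cat flatten_cat. Qed.

Lemma nclosure_conj_prod gs : all (fun p => valid p.1) gs -> nclosure (conj_prod gs).
Proof.
elim: gs => [_|p gs IH /andP[Hp Hgs]]; first exact: subgroup_gen_nil.
by apply: nclosure_cat (IH Hgs); exact: nclosure_sigma1_conj.
Qed.

Lemma sigma1_conj_mulV g b u :
  valid g -> sigma1_conj g b ++ sigma1_conj g (~~ b) ++ u ~= u.
Proof.
move=> Hg; rewrite /sigma1_conj -!catA mulKw // -inv_sigma1_pow.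
by rewrite mulKVw ?valid_sigma1_pow // mulKVw.
Qed.

Lemma derived_balanced_conj_prod (t : nat -> word) ys :
  (forall y, valid (t y)) -> (forall y, signed_count ys y = 0%R) ->
  derived (conj_prod [seq (t q.1, q.2) | q <- ys]).
Proof.
move=> Ht; have Nt zs : nclosure (conj_prod [seq (t q.1, q.2) | q <- zs]).
  by apply: nclosure_conj_prod; apply/allP => _ /mapP[q _ ->]; exact: Ht.
have [k] := ubnP (size ys); elim: k ys => // k IH [|[y b] ys] /= lt_ys H0.
  exact: subgroup_gen_nil.
have Hp := signed_count_partner (H0 y); move: lt_ys H0; case/splitPr: Hp => ys1 ys2 lt_ys H0.
set P1 := conj_prod [seq (t q.1, q.2) | q <- ys1].
set P2 := conj_prod [seq (t q.1, q.2) | q <- ys2].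
have -> : conj_prod ((t y, b) :: [seq (t q.1, q.2) | q <- ys1 ++ (y, ~~ b) :: ys2]) =
          sigma1_conj (t y) b ++ P1 ++ sigma1_conj (t y) (~~ b) ++ P2.
  by rewrite /P1 /P2 /conj_prod /= !map_cat flatten_cat.
have pair_cancels : sigma1_conj (t y) b ++ P1 ++ sigma1_conj (t y) (~~ b) ++ P2 ≡ P1 ++ P2.
  have comm := eqd_nclosure_comm (Nt ys1) (nclosure_sigma1_conj (~~ b) (Ht y)).
  have := eqd_catl (valid_sigma1_conj b (Ht y)) (eqd_catr (nclosure_valid (Nt ys2)) comm).
  by rewrite -[(P1 ++ _) ++ P2]catA -[(_ ++ P1) ++ P2]catA sigma1_conj_mulV.
apply: eqd_derived pair_cancels _.
rewrite /P1 /P2 -conj_prod_cat -map_cat; apply: IH => [|z].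
  by move: lt_ys; rewrite !size_cat /=; lia.
by rewrite -(signed_count_drop_pair y b).
Qed.
End NormalClosure.

(** * Abelianization through a cocycle of a permutation representation *)

Section Cocycle.
Local Open Scope ring_scope.
Variables (n r : nat) (fwd bwd : seq (seq nat)) (cgen : seq (seq int)).
Local Notation "u ~= v" := (braid_eq n u v) (at level 70).
Local Notation valid := (valid_word n).

Definition act_letter (l : letter) (y : nat) : nat :=
  nth y (nth [::] (if l.2 then fwd else bwd) l.1) y.

Definition act (w : word) (y : nat) : nat := foldr act_letter y w.

Definition cocycle_letter (l : letter) (y : nat) : int :=
  if l.2 then nth 0 (nth [::] cgen l.1) y
  else - nth 0 (nth [::] cgen l.1) (act_letter (l.1, true) y).

(* The crossed homomorphism d with d(uv) = d(u) + u.d(v) on Z^r, where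
   (u.f)(y) = f(u^-1 y) and d(sigma_(i+1)) is row i of cgen; cocycle w y is d(w)(y). *)
Fixpoint cocycle (w : word) (y : nat) : int :=
  if w is l :: w' then cocycle_letter l y + cocycle w' (act_letter (inv_letter l) y) else 0.

Lemma act_cat u v y : act (u ++ v) y = act u (act v y).
Proof. by rewrite /act foldr_cat. Qed.

Lemma act_inv_cons l w y :
  act (inv_word (l :: w)) y = act (inv_word w) (act_letter (inv_letter l) y).
Proof. by rewrite inv_word_cons act_cat. Qed.

Lemma cocycle_cat u v y : cocycle (u ++ v) y = cocycle u y + cocycle v (act (inv_word u) y).
Proof. by elim: u y => [|l u IH] y /=; rewrite ?add0r // IH act_inv_cons addrA. Qed.

Definition table_row_ok (row : seq nat) : bool := (size row == r) && all (fun y => (y < r)%N) row.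

Definition action_tables_ok : bool := all table_row_ok fwd && all table_row_ok bwd.

Definition cocycle_table_ok : bool := all (fun a => size a == r) cgen.

Definition same_on_points (u v : word) : bool :=
  all (fun y => [&& act u y == act v y, act (inv_word u) y == act (inv_word v) y
                  & cocycle u y == cocycle v y]) (iota 0 r).

Definition relations_respected : bool :=
  all (fun rel => same_on_points rel.1 rel.2) (braid_relations n).

Hypothesis action_tables : action_tables_ok.
Hypothesis cocycle_table : cocycle_table_ok.
Hypothesis relations : relations_respected.

Lemma act_letter_lt l y : (y < r)%N -> (act_letter l y < r)%N.
Proof.
case/andP: action_tables => Hf Hb lt_y; rewrite /act_letter.
have row_lt T : all table_row_ok T -> (nth y (nth [::] T l.1) y < r)%N.
  move=> /allP HT; case: (ltnP l.1 (size T)) => Hl; last by rewrite (nth_default [::] Hl) nth_nil.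
  case/andP: (HT _ (mem_nth [::] Hl)) => /eqP size_row /allP; apply.
  by rewrite mem_nth ?size_row.
by case: l.2; apply: row_lt.
Qed.

Lemma act_lt w y : (y < r)%N -> (act w y < r)%N.
Proof. by elim: w => //= l w IH /IH; exact: act_letter_lt. Qed.

Lemma act_letter_id l y : (r <= y)%N -> act_letter l y = y.
Proof.
case/andP: action_tables => Hf Hb le_y; rewrite /act_letter.
have row_id T : all table_row_ok T -> nth y (nth [::] T l.1) y = y.
  move=> /allP HT; case: (ltnP l.1 (size T)) => Hl; last by rewrite (nth_default [::] Hl) nth_nil.
  by case/andP: (HT _ (mem_nth [::] Hl)) => /eqP size_row _; rewrite nth_default ?size_row.
by case: l.2; apply: row_id.
Qed.

Lemma cocycle_letter0 l y : (r <= y)%N -> cocycle_letter l y = 0.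
Proof.
move: cocycle_table => /allP Hc le_y.
have cgen0 z : (r <= z)%N -> nth 0 (nth [::] cgen l.1) z = 0.
  move=> le_z; case: (ltnP l.1 (size cgen)) => Hl; last by rewrite (nth_default [::] Hl) nth_nil.
  by rewrite nth_default // (eqP (Hc _ (mem_nth [::] Hl))).
by rewrite /cocycle_letter act_letter_id //; case: ifP; rewrite cgen0 ?oppr0.
Qed.

Lemma act_id w y : (r <= y)%N -> act w y = y.
Proof. by move=> le_y; elim: w => //= l w ->; exact: act_letter_id. Qed.

Lemma cocycle0 w y : (r <= y)%N -> cocycle w y = 0.
Proof.
by elim: w y => //= l w IH y le_y; rewrite cocycle_letter0 // act_letter_id // IH ?addr0.
Qed.

Lemma same_on_pointsP u v : same_on_points u v -> forall y,
  [/\ act u y = act v y, act (inv_word u) y = act (inv_word v) y & cocycle u y = cocycle v y].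
Proof.
move=> /allP H y; case: (ltnP y r) => lt_y.
  by have := H y; rewrite mem_iota lt_y => /(_ isT) /and3P[/eqP ? /eqP ? /eqP ?].
by rewrite !act_id // !cocycle0.
Qed.

Lemma braid_eq_act_cocycle u v : u ~= v -> forall y,
  [/\ act u y = act v y, act (inv_word u) y = act (inv_word v) y & cocycle u y = cocycle v y].
Proof.
elim=> [_ _ [a b l r' /braid_relations_complete Hlr]|w|{}u {}v _ IH|{}u {}v w _ IH1 _ IH2] z.
- have Hl := same_on_pointsP (allP relations _ Hlr).
  rewrite !(act_cat, inv_word_cat, cocycle_cat).
  by have [-> _ _] := Hl (act b z); have [_ -> ->] := Hl (act (inv_word a) z).
- by [].
- by have [] := IH z.
- by have [? ? ?] := IH1 z; have [? ? ?] := IH2 z; split; congruence.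
Qed.

Lemma braid_eq_act u v y : u ~= v -> act u y = act v y.
Proof. by move=> Huv; have [] := braid_eq_act_cocycle Huv y. Qed.

Lemma braid_eq_cocycle u v y : u ~= v -> cocycle u y = cocycle v y.
Proof. by move=> Huv; have [] := braid_eq_act_cocycle Huv y. Qed.

Lemma act_letterK i y : (i < n.-1)%N -> act_letter (i, true) (act_letter (i, false) y) = y.
Proof. by move=> lt_i; have := braid_eq_act y (mulKVw_letter [::] (l := (i, true)) lt_i). Qed.

Lemma act_invK w y : valid w -> act (inv_word w) (act w y) = y.
Proof. by move=> Hw; rewrite -act_cat (braid_eq_act _ (mulVw Hw)). Qed.

Lemma act_invKV w y : valid w -> act w (act (inv_word w) y) = y.
Proof. by move=> Hw; rewrite -act_cat (braid_eq_act _ (mulwV Hw)). Qed.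

Lemma cocycle_inv_word w y : valid w -> cocycle (inv_word w) y = - cocycle w (act w y).
Proof.
move=> Hw; have := braid_eq_cocycle (act w y) (mulwV Hw).
by rewrite cocycle_cat act_invK // addrC => /eqP; rewrite addr_eq0 => /eqP.
Qed.

Variables (m : nat) (L : int).
Hypothesis n_gt1 : (0 < n.-1)%N.
Hypothesis r_gt0 : (0 < r)%N.

Definition sigma1_pow_ok : bool :=
  all (fun y => (act (sigma1_pow m true) y == y) &&
                (cocycle (sigma1_pow m true) y == if y == 0%N then L else 0)) (iota 0 r).

Hypothesis sigma1_pow_good : sigma1_pow_ok.

Lemma sigma1_pow_okP y : act (sigma1_pow m true) y = y /\
  cocycle (sigma1_pow m true) y = if y == 0%N then L else 0.
Proof.
case: (ltnP y r) => lt_y.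
  by move/allP/(_ y): sigma1_pow_good; rewrite mem_iota lt_y => /(_ isT) /andP[/eqP ? /eqP ?].
by rewrite act_id // cocycle0 // (gtn_eqF (leq_trans r_gt0 lt_y)).
Qed.

Lemma act_sigma1_pow b y : act (sigma1_pow m b) y = y.
Proof.
have act_x z := (sigma1_pow_okP z).1; case: b => //.
rewrite -[false]/(~~ true) -inv_sigma1_pow -{1}[y]act_x.
exact/act_invK/valid_sigma1_pow.
Qed.

Lemma cocycle_sigma1_pow b y :
  cocycle (sigma1_pow m b) y = if y == 0%N then bsign b * L else 0.
Proof.
have [_ cocycle_x] := sigma1_pow_okP y; case: b; first by rewrite cocycle_x mul1r.
rewrite -[false]/(~~ true) -inv_sigma1_pow cocycle_inv_word ?valid_sigma1_pow //.
by rewrite act_sigma1_pow cocycle_x; case: eqP; rewrite ?oppr0 ?mulN1r.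
Qed.

Lemma act_sigma1_conj g b y : valid g -> act (sigma1_conj m g b) y = y.
Proof. by move=> Hg; rewrite !act_cat act_sigma1_pow act_invKV. Qed.

Lemma cocycle_sigma1_conj g b y : valid g ->
  cocycle (sigma1_conj m g b) y = if y == act g 0 then bsign b * L else 0.
Proof.
move=> Hg; rewrite !cocycle_cat inv_sigma1_pow act_sigma1_pow cocycle_sigma1_pow.
rewrite cocycle_inv_word // act_invKV // addrCA subrr addr0.
by rewrite (can2_eq (@act_invKV g ^~ Hg) (@act_invK g ^~ Hg)).
Qed.

Definition conj_points (gs : seq (word * bool)) : seq (nat * bool) :=
  [seq (act p.1 0, p.2) | p <- gs].

Lemma act_conj_prod gs y : all (fun p => valid p.1) gs -> act (conj_prod m gs) y = y.
Proof.
by elim: gs => //= p gs IH /andP[Hp Hgs]; rewrite act_cat IH // act_sigma1_conj.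
Qed.

Lemma cocycle_conj_prod gs y : all (fun p => valid p.1) gs ->
  cocycle (conj_prod m gs) y = L * signed_count (conj_points gs) y.
Proof.
elim: gs => [_|p gs IH /andP[Hp Hgs]] /=; first by rewrite /signed_count big_nil mulr0.
rewrite cocycle_cat inv_sigma1_conj act_sigma1_conj // IH // cocycle_sigma1_conj //.
by rewrite /signed_count big_cons eq_sym; case: eqP; rewrite ?add0r // mulrDr mulrC.
Qed.

Lemma nclosure_act w y : in_normal_closure n m w -> act w y = y.
Proof. by case=> _ [gs [Hgs Hw]]; rewrite (braid_eq_act y Hw) act_conj_prod. Qed.

Lemma nclosure_act_inv w y : in_normal_closure n m w -> act (inv_word w) y = y.
Proof.
by move/in_normal_closureE/(nclosure_inv n_gt1)/in_normal_closureE; exact: nclosure_act.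
Qed.

Hypothesis L_neq0 : L != 0.

Definition abelianization (w : word) : 'rV[int]_r := \row_(i < r) (cocycle w i %/ L)%Z.

Lemma abelianization_conj_prod gs : all (fun p => valid p.1) gs ->
  abelianization (conj_prod m gs) = \row_(i < r) signed_count (conj_points gs) i.
Proof. by move=> Hgs; apply/rowP => i; rewrite !mxE cocycle_conj_prod // mulKz. Qed.

Lemma abelianization_braid_eq u v : u ~= v -> abelianization u = abelianization v.
Proof. by move=> Huv; apply/rowP => i; rewrite !mxE (braid_eq_cocycle i Huv). Qed.

Lemma abelianization_cat u v : nclosure n m u -> nclosure n m v ->
  abelianization (u ++ v) = abelianization u + abelianization v.
Proof.
move=> /in_normal_closureE Hu /in_normal_closureE Hv.
have [[_ [gs [Hgs Egs]]] [_ [hs [Hhs Ehs]]]] := (Hu, Hv).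
apply/rowP => i; rewrite !mxE cocycle_cat nclosure_act_inv //.
by rewrite (braid_eq_cocycle _ Egs) (braid_eq_cocycle _ Ehs) !cocycle_conj_prod // -mulrDr !mulKz.
Qed.

Lemma abelianization_inv w : nclosure n m w -> abelianization (inv_word w) = - abelianization w.
Proof.
move=> Hw; have Hw' := nclosure_inv n_gt1 Hw.
apply/eqP; rewrite -addr_eq0 addrC -abelianization_cat //.
rewrite (abelianization_braid_eq (mulwV (nclosure_valid Hw))).
by apply/eqP/rowP => i; rewrite !mxE div0z.
Qed.

Lemma abelianization_derived w : derived n m w -> abelianization w = 0.
Proof.
case=> _ [s [Gs Hs]]; rewrite (abelianization_braid_eq Hs) {w Hs}.
have {}Gs u : u \in s -> nclosure n m u /\ abelianization u = 0.
  case/Gs=> a [b [Ha [Hb ->]]]; split; first exact: nclosure_commutator.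
  have [Ha' Hb'] := (nclosure_inv n_gt1 Ha, nclosure_inv n_gt1 Hb).
  rewrite /commutator !abelianization_cat ?abelianization_inv //; last first.
  - by do !apply: nclosure_cat.
  - by apply: nclosure_cat.
  by rewrite addrA -opprD subrr.
elim: s Gs => [_|u s IH /forall_cons[[Nu Au] Gs]] /=.
  by apply/rowP => i; rewrite !mxE div0z.
rewrite abelianization_cat ?Au ?IH ?add0r //.
by apply: subgroup_gen_flatten => v /Gs[].
Qed.

Variable t : nat -> word.
Hypothesis t_valid : forall y, valid (t y).
Hypothesis act_t : forall y, (y < r)%N -> act (t y) 0 = y.
Hypothesis stabilizer_centralizes :
  forall g, valid g -> centralizes_x n m (inv_word (t (act g 0)) ++ g).

Lemma sigma1_conj_transversal g b : valid g ->
  eq_mod_derived n m (sigma1_conj m g b) (sigma1_conj m (t (act g 0)) b).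
Proof.
set y := act g 0 => Hg; have Hh := stabilizer_centralizes Hg.
have Ht' : valid (inv_word (t y)) by rewrite valid_inv_word.
have := eqd_catl n_gt1 (t_valid y) (eqd_catr Ht' (centralizes_x_conj n_gt1 b Hh)).
by rewrite /sigma1_conj !inv_word_cat inv_wordK -!catA mulKVw // mulwV // cats0.
Qed.

Lemma conj_prod_transversal gs : all (fun p => valid p.1) gs ->
  eq_mod_derived n m (conj_prod m gs) (conj_prod m [seq (t q.1, q.2) | q <- conj_points gs]).
Proof.
elim: gs => [_|p gs IH /andP[Hp Hgs]] /=; first exact: eqd_refl.
exact (eqd_cat n_gt1 (sigma1_conj_transversal p.2 Hp) (IH Hgs)).
Qed.

Lemma abelianization_kernel w :
  in_normal_closure n m w -> abelianization w = 0 -> derived n m w.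
Proof.
case=> _ [gs [Hgs Hw]]; rewrite (abelianization_braid_eq Hw) abelianization_conj_prod //.
move=> /rowP H0; rewrite Hw.
apply: eqd_derived (conj_prod_transversal Hgs) _.
apply: derived_balanced_conj_prod => // y; case: (ltnP y r) => lt_y.
  by have := H0 (Ordinal lt_y); rewrite !mxE.
apply: (@signed_count_out (fun z => z < r)%N); last by rewrite -leqNgt.
by apply/allP => _ /mapP[p _ ->]; exact: act_lt.
Qed.

Definition row_points (v : 'rV[int]_r) : seq (nat * bool) :=
  flatten [seq nseq `|v ord0 i|%N (val i, 0 <= v ord0 i) | i <- enum 'I_r].

Lemma signed_count_row_points v (i : 'I_r) : signed_count (row_points v) i = v ord0 i.
Proof.
rewrite signed_count_flatten big_map big_enum /= (bigD1 i) //= signed_count_nseq eqxx.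
rewrite abs_mul_bsign big1 ?addr0 // => j /negbTE ji.
by rewrite signed_count_nseq; case: eqP => // /val_inj ji'; rewrite ji' eqxx in ji.
Qed.

Lemma abelianization_surjective v :
  exists w, in_normal_closure n m w /\ abelianization w = v.
Proof.
set gs := [seq (t q.1, q.2) | q <- row_points v].
have Hgs : all (fun p => valid p.1) gs by apply/allP => _ /mapP[q _ ->]; exact: t_valid.
have Hpts : conj_points gs = row_points v.
  rewrite /conj_points -map_comp; apply: map_id_in => q.
  by case/flattenP=> _ /mapP[i _ ->] /nseqP[-> _] /=; rewrite act_t.
exists (conj_prod m gs); split.
  by split; [exact/nclosure_valid/nclosure_conj_prod | exists gs].
by apply/rowP => i; rewrite abelianization_conj_prod // mxE Hpts signed_count_row_points.
Qed.

Theorem H1_free_of_cocycle : H1_normal_closure_free_of_rank n m r.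
Proof.
exists abelianization; split; [|split; [|split]].
- by move=> u v _ _; exact: abelianization_braid_eq.
- by move=> u v /in_normal_closureE Hu /in_normal_closureE Hv; exact: abelianization_cat.
- exact: abelianization_surjective.
- move=> w Hw; rewrite in_commutator_of_normal_closureE.
  by split; [exact: abelianization_kernel | exact: abelianization_derived].
Qed.
End Cocycle.

(** * Schreier generators and certificates *)

Section SchreierLemma.
Variables (n r : nat) (a : letter -> nat -> nat) (t : nat -> word) (P : word -> Prop).
Local Notation "u ~= v" := (braid_eq n u v) (at level 70).
Local Notation valid := (valid_word n).

Hypothesis a_lt : forall l y, y < r -> a l y < r.
Hypothesis aK : forall i y, i < n.-1 -> a (i, true) (a (i, false) y) = y.
Hypothesis t_valid : forall y, valid (t y).
Hypothesis P_nil : P [::].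
Hypothesis P_cat : forall u v, P u -> P v -> P (u ++ v).
Hypothesis P_inv : forall u, P u -> P (inv_word u).
Hypothesis P_braid_eq : forall u v, u ~= v -> P u -> P v.

Definition schreier_gen (z i : nat) : word := inv_word (t (a (i, true) z)) ++ (i, true) :: t z.

Hypothesis P_schreier_gen : forall z i, z < r -> i < n.-1 -> P (schreier_gen z i).

Lemma schreier_letter l z : l.1 < n.-1 -> z < r -> P (inv_word (t (a l z)) ++ l :: t z).
Proof.
case: l => i [] /= lt_i lt_z; first exact: P_schreier_gen.
have := P_inv (P_schreier_gen (a_lt (i, false) lt_z) lt_i).
by rewrite /schreier_gen aK // inv_word_cat inv_wordK inv_word_cons -catA.
Qed.

Lemma schreier g y : valid g -> y < r -> P (inv_word (t (foldr a y g)) ++ g ++ t y).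
Proof.
move=> + lt_y; elim: g => [_|l g IH /andP[Hl Hg]] /=.
  by apply: P_braid_eq P_nil; rewrite mulVw.
have lt_z : foldr a y g < r by elim: (g) => //= ? ? /a_lt.
apply: P_braid_eq (P_cat (schreier_letter Hl lt_z) (IH Hg)).
by rewrite -!catA /= mulKVw.
Qed.
End SchreierLemma.

Inductive token :=
| TRel of word & bool & nat & nat & bool
| TConj of word & bool
| TCent of nat & bool
| TGen of nat & nat & bool.

Section SchreierCertificate.
Variables (n m r : nat) (fwd bwd : seq (seq nat)) (cgen : seq (seq int)).
Variables (transversal centralizing : seq word) (centralizing_proofs : seq (seq token)).
Variable schreier_proofs : seq (nat * nat * seq token).
Local Notation "u ~= v" := (braid_eq n u v) (at level 70).
Local Notation valid := (valid_word n).
Local Notation a := (act_letter fwd bwd).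
Local Notation t y := (nth [::] transversal y).
Local Notation c k := (nth [::] centralizing k).
Local Notation gen := (schreier_gen a (fun y => t y)).

Definition signed_word (u : word) (s : bool) : word := if s then u else inv_word u.

Definition token_word (tok : token) : word :=
  match tok with
  | TRel u b i j s => u ++ signed_word (relator b i j) s ++ inv_word u
  | TConj u s => sigma1_conj m u s
  | TCent k s => signed_word (c k) s
  | TGen z i s => signed_word (gen z i) s
  end.

Definition token_ok (known : seq (nat * nat)) (tok : token) : bool :=
  match tok with
  | TRel u b i j _ => valid u && relator_ok n b i j
  | TConj u _ => valid u
  | TCent k _ => k < size centralizing
  | TGen z i _ => (z, i) \in known
  end.

Definition tokens_match (w : word) (known : seq (nat * nat)) (toks : seq token) : bool :=
  all (token_ok known) toks && (free_reduce w == free_reduce (flatten (map token_word toks))).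

Fixpoint schreier_proofs_ok (known : seq (nat * nat)) (cs : seq (nat * nat * seq token)) :=
  if cs is (z, i, toks) :: cs' then
    [&& z < r, i < n.-1, tokens_match (gen z i) known toks
      & schreier_proofs_ok ((z, i) :: known) cs']
  else true.

Definition transversal_ok : bool :=
  [&& size transversal == r, all valid transversal, t 0 == [::]
    & all (fun y => act fwd bwd (t y) 0 == y) (iota 0 r)].

Definition is_relator_token (tok : token) : bool := if tok is TRel _ _ _ _ _ then true else false.

Definition centralizing_ok (proofs : seq (seq token)) : bool :=
  all (fun k => [&& valid (c k), all is_relator_token (nth [::] proofs k)
                  & tokens_match (commutator (c k) [:: (0, true)]) [::] (nth [::] proofs k)])
      (iota 0 (size centralizing)).

Definition schreier_proofs_complete (cs : seq (nat * nat * seq token)) : bool :=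
  all (fun z => all (fun i => (z, i) \in [seq p.1 | p <- cs]) (iota 0 n.-1)) (iota 0 r).

Hypothesis n_gt1 : 0 < n.-1.
Hypothesis r_gt0 : 0 < r.
Hypothesis action_tables : action_tables_ok r fwd bwd.
Hypothesis cocycle_table : cocycle_table_ok r cgen.
Hypothesis relations : relations_respected n r fwd bwd cgen.
Hypothesis transversal_good : transversal_ok.
Hypothesis centralizing_good : centralizing_ok centralizing_proofs.
Hypothesis schreier_good : schreier_proofs_ok [::] schreier_proofs.
Hypothesis schreier_complete : schreier_proofs_complete schreier_proofs.

Lemma transversal_valid y : valid (t y).
Proof.
case/and4P: transversal_good => _ /allP Hts _ _.
by case: (ltnP y (size transversal)) => [/(mem_nth [::])/Hts|/(nth_default [::]) ->].
Qed.

Lemma act_transversal y : y < r -> act fwd bwd (t y) 0 = y.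
Proof.
case/and4P: transversal_good => _ _ _ /allP Hts lt_y.
by apply/eqP; apply: Hts; rewrite mem_iota.
Qed.

Lemma relator_tokens_trivial toks : all is_relator_token toks -> all (token_ok [::]) toks ->
  flatten (map token_word toks) ~= [::].
Proof.
elim: toks => //= tok toks IH /andP[Htok Hrels] /andP[Hok Hoks].
case: tok Htok Hok => // u b i j s _ /andP[Hu Hrel] /=.
rewrite (IH Hrels Hoks) cats0.
have -> : signed_word (relator b i j) s ~= [::] by case: s; rewrite /= (relator_trivial Hrel).
by rewrite mulwV.
Qed.

Lemma centralizing_centralizes k : k < size centralizing -> centralizes_x n m (c k).
Proof.
move=> lt_k; move/allP/(_ k): centralizing_good; rewrite mem_iota lt_k => /(_ isT).
case/and3P=> Hc Hrels /andP[Hoks /eqP Hred].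
have Htriv := relator_tokens_trivial Hrels Hoks.
have Hsigma1 : valid [:: (0, true)] by rewrite /= n_gt1.
apply: (centralizes_x_commute n_gt1) => //; apply: commute_nseq; apply: commute_of_commutator => //.
etransitivity; last exact: Htriv.
apply: free_reduce_braid_eq Hred; first by rewrite /commutator !valid_wordE Hc Hsigma1.
by rewrite (braid_eq_valid Htriv).
Qed.

Lemma token_centralizes known tok :
  (forall z i, (z, i) \in known -> centralizes_x n m (gen z i)) ->
  token_ok known tok -> centralizes_x n m (token_word tok).
Proof.
have signed_centralizes u s : centralizes_x n m u -> centralizes_x n m (signed_word u s).
  by case: s => //; exact: (centralizes_x_inv n_gt1).
move=> Hknown; case: tok => /=.
- move=> u b i j s /andP[Hu Hrel]; apply: centralizes_x_braid_eq (centralizes_x_nil m n_gt1).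
  have -> : signed_word (relator b i j) s ~= [::] by case: s; rewrite /= (relator_trivial Hrel).
  by rewrite /= mulwV.
- by move=> u s Hu; apply/(centralizes_x_nclosure n_gt1)/nclosure_sigma1_conj.
- by move=> k s /centralizing_centralizes; exact: signed_centralizes.
- by move=> z i s /Hknown; exact: signed_centralizes.
Qed.

Lemma tokens_match_centralizes w known toks :
  (forall z i, (z, i) \in known -> centralizes_x n m (gen z i)) -> valid w ->
  tokens_match w known toks -> centralizes_x n m w.
Proof.
move=> Hknown Hw /andP[Hoks /eqP Hred].
have Htoks : centralizes_x n m (flatten (map token_word toks)).
  elim: toks Hoks {Hred} => [_|tok toks IH /andP[Htok /IH]]; first exact: centralizes_x_nil.
  by apply: (centralizes_x_cat n_gt1); exact: token_centralizes Htok.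
apply: (centralizes_x_braid_eq _ Htoks); symmetry; apply: free_reduce_braid_eq Hred => //.
exact: centralizes_x_valid Htoks.
Qed.

Lemma schreier_proofs_sound known cs :
  (forall z i, (z, i) \in known -> centralizes_x n m (gen z i)) ->
  schreier_proofs_ok known cs ->
  forall z i, (z, i) \in known ++ [seq p.1 | p <- cs] -> centralizes_x n m (gen z i).
Proof.
elim: cs known => [|[[z i] toks] cs IH] known Hknown /=.
  by move=> _ z i; rewrite cats0; exact: Hknown.
case/and4P=> lt_z lt_i Hmatch /IH {}IH z' i'.
rewrite -cat1s catA cats1 mem_cat mem_rcons -mem_cat; apply: IH => z'' i''.
rewrite inE => /orP[/eqP[-> ->]|]; last exact: Hknown.
apply: tokens_match_centralizes Hknown _ Hmatch.
by rewrite /schreier_gen !valid_wordE /= lt_i !transversal_valid.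
Qed.

Lemma schreier_gen_centralizes z i : z < r -> i < n.-1 -> centralizes_x n m (gen z i).
Proof.
move=> lt_z lt_i; apply: (schreier_proofs_sound (known := [::])) schreier_good _ _ _ => //.
move/allP/(_ z): schreier_complete; rewrite mem_iota lt_z => /(_ isT) /allP.
by apply; rewrite mem_iota.
Qed.

Lemma stabilizer_centralizes g : valid g ->
  centralizes_x n m (inv_word (t (act fwd bwd g 0)) ++ g).
Proof.
move=> Hg; have t0 : t 0 = [::] by case/and4P: transversal_good => _ _ /eqP.
have := schreier (act_letter_lt action_tables) (act_letterK action_tables cocycle_table relations)
  transversal_valid (centralizes_x_nil m n_gt1) (centralizes_x_cat n_gt1)
  (centralizes_x_inv n_gt1) (@centralizes_x_braid_eq n m) schreier_gen_centralizes Hg r_gt0.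
by rewrite /= t0 cats0.
Qed.
End SchreierCertificate.

(* Row i of perm_fwd (perm_bwd) lists the images of the points under sigma_(i+1)
   (its inverse), row i of cocycle_gens is d(sigma_(i+1)), and d(x) = x_scale e_0. *)
Record certificate := Certificate {
  perm_fwd : seq (seq nat);
  perm_bwd : seq (seq nat);
  cocycle_gens : seq (seq int);
  x_scale : int;
  transversal : seq word;
  centralizing : seq word;
  centralizing_proofs : seq (seq token);
  schreier_proofs : seq (nat * nat * seq token) }.

Definition certificate_ok (n m r : nat) (c : certificate) : bool :=
  let: Certificate fwd bwd cgen L ts cs cps sps := c in
  [&& 0 < n.-1, 0 < r, L != 0%R, action_tables_ok r fwd bwd, cocycle_table_ok r cgen,
      relations_respected n r fwd bwd cgen, sigma1_pow_ok r fwd bwd cgen m L,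
      transversal_ok n r fwd bwd ts, centralizing_ok n m fwd bwd ts cs cps,
      schreier_proofs_ok n m r fwd bwd ts cs [::] sps & schreier_proofs_complete n r sps].

Theorem H1_free_of_certificate n m r c :
  certificate_ok n m r c -> H1_normal_closure_free_of_rank n m r.
Proof.
case: c => fwd bwd cgen L ts cs cps sps /=.
case/and5P=> n_gt1 r_gt0 L_neq0 Hact /and5P[Hcoc Hrel Hx Hts /and3P[Hcs Hsps Hall]].
apply: (H1_free_of_cocycle Hact Hcoc Hrel n_gt1 r_gt0 Hx L_neq0 (transversal_valid Hts)).
  exact: act_transversal Hts.
exact (stabilizer_centralizes n_gt1 r_gt0 Hact Hcoc Hrel Hts Hcs Hsps Hall).
Qed.

(** * Certificates for the five cases *)

Local Open Scope ring_scope.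

(* Letter 2 i encodes sigma_(i+1) and 2 i + 1 its inverse. *)
Definition dec (s : seq nat) : word := map (fun k => (k./2, ~~ odd k)) s.

Definition cert_3_3 : certificate := {|
  perm_fwd := [:: [:: 0; 2; 3; 1]; [:: 1; 3; 2; 0]];
  perm_bwd := [:: [:: 0; 3; 1; 2]; [:: 3; 0; 2; 1]];
  cocycle_gens := [:: [:: 2; 1; -1; 0]; [:: 0; 0; 2; 0]];
  x_scale := 6;
  transversal := [:: dec [:: ]; dec [:: 2]; dec [:: 0; 2]; dec [:: 3]];
  centralizing := [:: dec [:: 0]; dec [:: 2; 0; 0; 2]];
  centralizing_proofs := [:: [:: ]; [:: TRel (dec [:: 2; 0]) true 0 0 true; TRel (dec [:: ]) true 0 0 false]];
  schreier_proofs :=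
    [:: (0, 0, [:: TCent 0 true]);
       (0, 1, [:: ]);
       (3, 1, [:: ]);
       (1, 0, [:: ]);
       (2, 0, [:: TGen 3 1 false; TCent 1 true; TGen 0 1 false; TGen 1 0 false]);
       (2, 1, [:: TGen 2 0 false; TGen 3 1 false; TRel (dec [:: ]) true 0 0 false; TGen 0 0 true; TGen 3 1 true; TGen 2 0 true]);
       (3, 0, [:: TConj (dec [:: 3]) true; TGen 1 0 false; TGen 2 0 false]);
       (1, 1, [:: TGen 3 0 false; TRel (dec [:: 3]) true 0 0 true; TGen 0 1 true; TGen 0 0 true; TGen 3 1 true; TGen 3 0 false])] |}.

Definition cert_3_4 : certificate := {|
  perm_fwd := [:: [:: 0; 2; 3; 4; 1; 5]; [:: 1; 5; 2; 0; 4; 3]];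
  perm_bwd := [:: [:: 0; 4; 1; 2; 3; 5]; [:: 3; 0; 2; 5; 4; 1]];
  cocycle_gens := [:: [:: 1; 1; -1; 0; 0; 0]; [:: 0; 0; 1; 0; 0; 0]];
  x_scale := 4;
  transversal := [:: dec [:: ]; dec [:: 2]; dec [:: 0; 2]; dec [:: 3]; dec [:: 1; 2]; dec [:: 2; 2]];
  centralizing := [:: dec [:: 0]; dec [:: 2; 0; 0; 2]];
  centralizing_proofs := [:: [:: ]; [:: TRel (dec [:: 2; 0]) true 0 0 true; TRel (dec [:: ]) true 0 0 false]];
  schreier_proofs :=
    [:: (0, 0, [:: TCent 0 true]);
       (0, 1, [:: ]);
       (3, 1, [:: ]);
       (1, 0, [:: ]);
       (2, 0, [:: TGen 3 1 false; TCent 1 true; TGen 0 1 false; TGen 1 0 false]);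
       (2, 1, [:: TGen 2 0 false; TGen 3 1 false; TRel (dec [:: ]) true 0 0 false; TGen 0 0 true; TGen 3 1 true; TGen 2 0 true]);
       (4, 0, [:: ]);
       (3, 0, [:: TGen 4 0 false; TConj (dec [:: 3]) true; TGen 1 0 false; TGen 2 0 false]);
       (4, 1, [:: TGen 4 0 false; TRel (dec [:: 3]) true 0 0 true; TGen 0 1 true; TGen 0 0 true; TGen 3 1 true; TGen 3 0 false]);
       (1, 1, [:: ]);
       (5, 0, [:: TRel (dec [:: 3; 3]) true 0 0 true; TGen 1 1 true; TGen 4 0 true; TGen 4 1 true; TGen 4 0 false; TGen 1 1 false]);
       (5, 1, [:: TRel (dec [:: 2]) true 0 0 false; TGen 2 0 true; TGen 2 1 true; TGen 1 0 true; TGen 1 1 false; TGen 5 0 false])] |}.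

Definition cert_3_5 : certificate := {|
  perm_fwd := [:: [:: 0; 2; 3; 4; 5; 1; 7; 8; 10; 6; 9; 11]; [:: 1; 6; 2; 0; 5; 9; 7; 3; 4; 11; 10; 8]];
  perm_bwd := [:: [:: 0; 5; 1; 2; 3; 4; 9; 6; 7; 10; 8; 11]; [:: 3; 0; 2; 7; 8; 4; 1; 6; 11; 5; 10; 9]];
  cocycle_gens := [:: [:: 2; 1; -3; 0; 1; 1; 0; -1; 0; 1; 0; 0]; [:: 0; 0; 2; 0; 0; 0; 0; 0; 0; 0; 0; 0]];
  x_scale := 10;
  transversal := [:: dec [:: ]; dec [:: 2]; dec [:: 0; 2]; dec [:: 3]; dec [:: 0; 3]; dec [:: 1; 2]; dec [:: 2; 2]; dec [:: 3; 3]; dec [:: 3; 0; 3]; dec [:: 2; 1; 2]; dec [:: 0; 3; 0; 3]; dec [:: 3; 3; 0; 3]];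
  centralizing := [:: dec [:: 0]; dec [:: 2; 0; 0; 2]];
  centralizing_proofs := [:: [:: ]; [:: TRel (dec [:: 2; 0]) true 0 0 true; TRel (dec [:: ]) true 0 0 false]];
  schreier_proofs :=
    [:: (0, 0, [:: TCent 0 true]);
       (0, 1, [:: ]);
       (3, 1, [:: ]);
       (1, 0, [:: ]);
       (2, 0, [:: TGen 3 1 false; TCent 1 true; TGen 0 1 false; TGen 1 0 false]);
       (2, 1, [:: TGen 2 0 false; TGen 3 1 false; TRel (dec [:: ]) true 0 0 false; TGen 0 0 true; TGen 3 1 true; TGen 2 0 true]);
       (5, 0, [:: ]);
       (1, 1, [:: ]);
       (3, 0, [:: ]);
       (4, 1, [:: TGen 5 0 false; TRel (dec [:: 3]) true 0 0 true; TGen 0 1 true; TGen 0 0 true; TGen 3 1 true; TGen 3 0 false]);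
       (4, 0, [:: TGen 5 0 false; TConj (dec [:: 3]) true; TGen 1 0 false; TGen 2 0 false; TGen 3 0 false]);
       (7, 1, [:: ]);
       (6, 0, [:: TGen 7 1 false; TRel (dec [:: 2]) true 0 0 false; TGen 2 0 true; TGen 2 1 true; TGen 1 0 true; TGen 1 1 false]);
       (8, 1, [:: ]);
       (7, 0, [:: TGen 8 1 false; TGen 4 0 false; TRel (dec [:: 3; 0]) true 0 0 true; TGen 4 1 true; TGen 3 0 true; TGen 7 1 true]);
       (6, 1, [:: TGen 7 0 false; TGen 8 1 false; TRel (dec [:: 2; 1]) true 0 0 false; TGen 3 0 true; TGen 7 1 true; TGen 6 0 true]);
       (5, 1, [:: ]);
       (9, 0, [:: TRel (dec [:: 3; 3]) true 0 0 true; TGen 1 1 true; TGen 5 0 true; TGen 4 1 true; TGen 4 0 false; TGen 5 1 false]);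
       (8, 0, [:: ]);
       (10, 0, [:: TGen 9 0 false; TConj (dec [:: 3; 3]) true; TGen 6 0 false; TGen 7 0 false; TGen 8 0 false]);
       (10, 1, [:: TGen 10 0 false; TRel (dec [:: 3; 0; 3]) true 0 0 true; TGen 5 1 true; TGen 4 0 true; TGen 8 1 true; TGen 8 0 false]);
       (11, 1, [:: ]);
       (11, 0, [:: TGen 11 1 false; TGen 8 0 false; TRel (dec [:: 2; 1; 2; 1]) true 0 0 true; TGen 10 1 true; TGen 8 0 true; TGen 11 1 true]);
       (9, 1, [:: TGen 11 0 false; TGen 11 1 false; TRel (dec [:: 2; 1; 2]) true 0 0 false; TGen 7 0 true; TGen 6 1 true; TGen 9 0 true])] |}.

Definition cert_4_3 : certificate := {|
  perm_fwd := [:: [:: 0; 2; 3; 1; 5; 8; 7; 10; 4; 9; 6; 11]; [:: 1; 3; 2; 0; 4; 11; 5; 7; 10; 8; 9; 6]; [:: 0; 7; 10; 6; 3; 1; 4; 5; 2; 9; 8; 11]];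
  perm_bwd := [:: [:: 0; 3; 1; 2; 8; 4; 10; 6; 5; 9; 7; 11]; [:: 3; 0; 2; 1; 4; 6; 11; 7; 9; 10; 8; 5]; [:: 0; 5; 8; 4; 6; 7; 3; 1; 10; 9; 2; 11]];
  cocycle_gens := [:: [:: 2; 1; 0; -1; -1; 1; -1; 1; 0; 0; 0; 0]; [:: 0; 0; 2; 0; 0; 0; 0; 0; -1; 0; 1; 0]; [:: 0; 0; 0; 0; 0; 0; 0; 0; 0; 2; 0; 0]];
  x_scale := 6;
  transversal := [:: dec [:: ]; dec [:: 2]; dec [:: 0; 2]; dec [:: 3]; dec [:: 5; 3]; dec [:: 5; 2]; dec [:: 4; 3]; dec [:: 4; 2]; dec [:: 5; 0; 2]; dec [:: 3; 5; 0; 2]; dec [:: 4; 0; 2]; dec [:: 2; 5; 2]];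
  centralizing := [:: dec [:: 0]; dec [:: 4]; dec [:: 2; 0; 0; 2]];
  centralizing_proofs := [:: [:: ]; [:: TRel (dec [:: ]) false 0 2 false]; [:: TRel (dec [:: 2; 0]) true 0 0 true; TRel (dec [:: ]) true 0 0 false]];
  schreier_proofs :=
    [:: (0, 0, [:: TCent 0 true]);
       (0, 2, [:: TCent 1 true]);
       (0, 1, [:: ]);
       (3, 1, [:: ]);
       (1, 0, [:: ]);
       (2, 0, [:: TGen 3 1 false; TCent 2 true; TGen 0 1 false; TGen 1 0 false]);
       (2, 1, [:: TGen 2 0 false; TGen 3 1 false; TRel (dec [:: ]) true 0 0 false; TGen 0 0 true; TGen 3 1 true; TGen 2 0 true]);
       (3, 0, [:: TConj (dec [:: 3]) true; TGen 1 0 false; TGen 2 0 false]);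
       (1, 1, [:: TGen 3 0 false; TRel (dec [:: 3]) true 0 0 true; TGen 0 1 true; TGen 0 0 true; TGen 3 1 true; TGen 3 0 false]);
       (1, 2, [:: ]);
       (7, 1, [:: TRel (dec [:: 3; 5]) true 1 0 true; TGen 1 2 true; TGen 0 1 true; TGen 0 2 true; TGen 0 1 false; TGen 1 2 false]);
       (5, 2, [:: ]);
       (2, 2, [:: ]);
       (7, 0, [:: TRel (dec [:: 3; 1; 5]) false 0 2 true; TGen 2 2 true; TGen 1 0 true; TGen 1 2 false]);
       (8, 2, [:: ]);
       (5, 0, [:: TGen 8 2 false; TRel (dec [:: 3; 1]) false 0 2 false; TGen 1 0 true; TGen 5 2 true]);
       (3, 2, [:: ]);
       (6, 1, [:: TGen 5 2 false; TRel (dec [:: 3]) true 1 0 false; TGen 0 1 true; TGen 0 2 true; TGen 3 1 true; TGen 3 2 false]);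
       (6, 0, [:: TRel (dec [:: 3; 5]) false 0 2 true; TGen 1 2 true; TGen 3 0 true; TGen 3 2 false]);
       (10, 0, [:: TGen 6 0 false; TConj (dec [:: 3; 5]) true; TGen 7 0 false]);
       (7, 2, [:: TRel (dec [:: 3; 4]) true 1 0 false; TGen 6 1 true; TGen 3 2 true; TGen 1 1 true; TGen 1 2 false; TGen 7 1 false]);
       (8, 1, [:: TRel (dec [:: 3; 1; 5]) true 0 0 false; TGen 7 0 true; TGen 7 1 true; TGen 6 0 true; TGen 6 1 false; TGen 5 0 false]);
       (10, 2, [:: TGen 8 1 false; TRel (dec [:: 3; 1; 5]) true 1 0 true; TGen 2 2 true; TGen 2 1 true; TGen 8 2 true; TGen 8 1 false]);
       (4, 2, [:: ]);
       (4, 1, [:: TGen 4 2 false; TGen 3 1 false; TRel (dec [:: ]) true 1 0 true; TGen 0 2 true; TGen 3 1 true; TGen 4 2 true]);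
       (4, 0, [:: TGen 5 2 false; TRel (dec [:: 3]) false 0 2 false; TGen 3 0 true; TGen 4 2 true]);
       (8, 0, [:: TGen 4 2 false; TRel (dec [:: 2]) false 0 2 false; TGen 2 0 true; TGen 8 2 true]);
       (6, 2, [:: TGen 4 1 false; TGen 4 2 false; TRel (dec [:: 2]) true 1 0 false; TGen 1 1 true; TGen 5 2 true; TGen 6 1 true]);
       (5, 1, [:: ]);
       (11, 0, [:: TRel (dec [:: 3; 4; 3]) true 0 0 true; TGen 5 1 true; TGen 4 0 true; TGen 4 1 true; TGen 4 0 false; TGen 5 1 false]);
       (11, 2, [:: TRel (dec [:: 3; 4; 3]) true 1 0 false; TGen 5 1 true; TGen 7 2 true; TGen 7 1 true; TGen 7 2 false; TGen 5 1 false]);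
       (11, 1, [:: TRel (dec [:: 2; 5]) true 0 0 false; TGen 10 0 true; TGen 8 1 true; TGen 5 0 true; TGen 5 1 false; TGen 11 0 false]);
       (9, 1, [:: ]);
       (9, 2, [:: TGen 9 1 false; TGen 8 2 false; TRel (dec [:: 3; 1]) true 1 0 false; TGen 2 1 true; TGen 8 2 true; TGen 9 1 true]);
       (10, 1, [:: TGen 9 2 false; TGen 9 1 false; TRel (dec [:: 3; 1; 4]) true 1 0 true; TGen 10 2 true; TGen 8 1 true; TGen 10 2 true]);
       (9, 0, [:: TGen 9 1 false; TGen 8 0 false; TRel (dec [:: 2; 4]) true 0 0 true; TGen 4 1 true; TGen 8 0 true; TGen 9 1 true])] |}.

Definition cert_5_3 : certificate := {|
  perm_fwd := [:: [:: 0; 2; 3; 1; 5; 9; 8; 11; 12; 4; 10; 13; 6; 7; 14; 17; 18; 25; 19; 16; 20; 23; 28; 29; 24; 15; 26; 27; 30; 21; 22; 31; 32; 39; 34; 35; 36; 33; 38; 37]; [:: 1; 3; 2; 0; 4; 14; 5; 20; 8; 12; 9; 19; 10; 13; 6; 15; 7; 32; 18; 24; 16; 17; 37; 23; 11; 29; 26; 25; 28; 27; 31; 33; 21; 30; 22; 35; 36; 34; 38; 39]; [:: 0; 8; 12; 6; 3; 1; 4; 7; 5; 2; 10; 11; 9; 13; 14; 16; 30; 18; 22; 28; 36; 21; 17; 23; 27; 19; 24; 26; 25; 29; 15; 20; 34; 33; 35; 32; 31; 37; 38; 39]; [:: 0; 1; 2; 3; 15; 17; 21; 5; 23; 25; 27;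 9; 29; 4; 32; 13; 6; 7; 8; 12; 14; 16; 22; 18; 10; 11; 26; 24; 28; 19; 30; 31; 20; 33; 34; 38; 35; 37; 36; 39]];
  perm_bwd := [:: [:: 0; 3; 1; 2; 9; 4; 12; 13; 6; 5; 10; 7; 8; 11; 14; 25; 19; 15; 16; 18; 20; 29; 30; 21; 24; 17; 26; 27; 22; 23; 28; 31; 32; 37; 34; 35; 36; 39; 38; 33]; [:: 3; 0; 2; 1; 4; 6; 14; 16; 8; 10; 12; 24; 9; 13; 5; 15; 20; 21; 18; 11; 7; 32; 34; 23; 19; 27; 26; 29; 28; 25; 33; 30; 17; 31; 37; 35; 36; 22; 38; 39]; [:: 0; 5; 9; 4; 6; 8; 3; 7; 1; 12; 10; 11; 2; 13; 14; 30; 15; 22; 17; 25; 31; 21; 18; 23; 26; 28; 27; 24; 19; 29; 16; 36; 35; 33; 32; 34; 20; 37; 38; 39]; [:: 0; 1; 2; 3; 13; 7; 16; 17; 18; 11; 24; 25; 19; 15; 20; 4; 21; 5; 23; 29; 32; 6; 22; 8; 27; 9; 26; 10; 28; 12; 30; 31; 14; 33; 34; 36; 38; 37; 35; 39]];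
  cocycle_gens := [:: [:: 2; 1; -1; 0; 0; 1; 0; 1; 1; -1; 0; -1; -1; 0; 0; 0; 0; 1; 1; -1; 0; 0; 1; 1; 0; -1; 0; 0; -1; -1; 0; 0; 0; -1; 0; 0; 0; 1; 0; 0]; [:: 0; 0; 2; 0; 0; 0; 0; 0; 0; -1; 0; -1; 1; 0; 0; 0; 0; 0; 0; 1; 0; 0; 0; 0; 0; -1; 0; 0; 0; 1; 0; 0; 0; 0; 0; 0; 0; 0; 0; 0]; [:: 0; 0; 0; 0; 0; 0; 0; 0; 0; 0; 2; 0; 0; 0; 0; 0; 0; 0; 0; 0; 0; 0; 0; 0; -1; 0; 0; 1; 0; 0; 0; 0; 0; 0; 0; 0; 0; 0; 0; 0]; [:: 0; 0; 0; 0; 0; 0; 0; 0; 0; 0; 0; 0; 0; 0; 0; 0; 0; 0; 0; 0; 0; 0; 0; 0; 0; 0; 2; 0; 0; 0; 0; 0; 0; 0; 0; 0; 0; 0; 0; 0]];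
  x_scale := 6;
  transversal := [:: dec [:: ]; dec [:: 2]; dec [:: 0; 2]; dec [:: 3]; dec [:: 5; 3]; dec [:: 5; 2]; dec [:: 4; 3]; dec [:: 7; 5; 2]; dec [:: 4; 2]; dec [:: 5; 0; 2]; dec [:: 3; 5; 0; 2]; dec [:: 0; 7; 5; 2]; dec [:: 4; 0; 2]; dec [:: 7; 5; 3]; dec [:: 2; 5; 2]; dec [:: 6; 5; 3]; dec [:: 7; 4; 3]; dec [:: 6; 5; 2]; dec [:: 7; 4; 2]; dec [:: 2; 0; 7; 5; 2]; dec [:: 2; 7; 5; 2]; dec [:: 6; 4; 3]; dec [:: 5; 6; 5; 2]; dec [:: 6; 4; 2]; dec [:: 7; 3; 5; 0; 2]; dec [:: 6; 5; 0; 2]; dec [:: 5; 7; 3; 5; 0; 2]; dec [:: 6; 3; 5; 0; 2]; dec [:: 4; 2; 0; 7; 5; 2]; dec [:: 6; 4; 0; 2]; dec [:: 5; 6; 5; 3]; dec [:: 5; 2; 7; 5; 2]; dec [:: 6; 2; 5; 2]; dec [:: 3; 5; 6; 5; 3]; dec [:: 3; 5; 6; 5; 2]; dec [:: 5; 6; 2; 5; 2]; dec [:: 4; 2; 7; 5; 2]; dec [:: 2; 5; 6; 5; 2]; dec [:: 6; 5; 6; 2; 5; 2]; dec [:: 0; 3; 5; 6; 5; 3]];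
  centralizing := [:: dec [:: 0]; dec [:: 4]; dec [:: 6]; dec [:: 2; 0; 0; 2]];
  centralizing_proofs := [:: [:: ]; [:: TRel (dec [:: ]) false 0 2 false]; [:: TRel (dec [:: ]) false 0 3 false]; [:: TRel (dec [:: 2; 0]) true 0 0 true; TRel (dec [:: ]) true 0 0 false]];
  schreier_proofs :=
    [:: (0, 0, [:: TCent 0 true]);
       (0, 2, [:: TCent 1 true]);
       (0, 3, [:: TCent 2 true]);
       (0, 1, [:: ]);
       (1, 3, [:: TRel (dec [:: 3]) false 1 3 false; TGen 0 1 true; TGen 0 3 true; TGen 0 1 false]);
       (3, 1, [:: ]);
       (3, 3, [:: TGen 3 1 false; TRel (dec [:: ]) false 1 3 true; TGen 0 3 true; TGen 3 1 true]);
       (1, 0, [:: ]);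
       (2, 0, [:: TGen 3 1 false; TCent 3 true; TGen 0 1 false; TGen 1 0 false]);
       (2, 1, [:: TGen 2 0 false; TGen 3 1 false; TRel (dec [:: ]) true 0 0 false; TGen 0 0 true; TGen 3 1 true; TGen 2 0 true]);
       (3, 0, [:: TConj (dec [:: 3]) true; TGen 1 0 false; TGen 2 0 false]);
       (2, 3, [:: TGen 2 0 false; TRel (dec [:: 2]) false 0 3 true; TGen 3 3 true; TGen 2 0 true]);
       (1, 1, [:: TGen 3 0 false; TRel (dec [:: 3]) true 0 0 true; TGen 0 1 true; TGen 0 0 true; TGen 3 1 true; TGen 3 0 false]);
       (1, 2, [:: ]);
       (8, 1, [:: TRel (dec [:: 3; 5]) true 1 0 true; TGen 1 2 true; TGen 0 1 true; TGen 0 2 true; TGen 0 1 false; TGen 1 2 false]);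
       (5, 2, [:: ]);
       (2, 2, [:: ]);
       (8, 0, [:: TRel (dec [:: 3; 1; 5]) false 0 2 true; TGen 2 2 true; TGen 1 0 true; TGen 1 2 false]);
       (9, 2, [:: ]);
       (5, 0, [:: TGen 9 2 false; TRel (dec [:: 3; 1]) false 0 2 false; TGen 1 0 true; TGen 5 2 true]);
       (3, 2, [:: ]);
       (6, 1, [:: TGen 5 2 false; TRel (dec [:: 3]) true 1 0 false; TGen 0 1 true; TGen 0 2 true; TGen 3 1 true; TGen 3 2 false]);
       (6, 0, [:: TRel (dec [:: 3; 5]) false 0 2 true; TGen 1 2 true; TGen 3 0 true; TGen 3 2 false]);
       (12, 0, [:: TGen 6 0 false; TConj (dec [:: 3; 5]) true; TGen 8 0 false]);
       (8, 2, [:: TRel (dec [:: 3; 4]) true 1 0 false; TGen 6 1 true; TGen 3 2 true; TGen 1 1 true; TGen 1 2 false; TGen 8 1 false]);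
       (9, 1, [:: TRel (dec [:: 3; 1; 5]) true 0 0 false; TGen 8 0 true; TGen 8 1 true; TGen 6 0 true; TGen 6 1 false; TGen 5 0 false]);
       (12, 2, [:: TGen 9 1 false; TRel (dec [:: 3; 1; 5]) true 1 0 true; TGen 2 2 true; TGen 2 1 true; TGen 9 2 true; TGen 9 1 false]);
       (4, 2, [:: ]);
       (4, 1, [:: TGen 4 2 false; TGen 3 1 false; TRel (dec [:: ]) true 1 0 true; TGen 0 2 true; TGen 3 1 true; TGen 4 2 true]);
       (4, 0, [:: TGen 5 2 false; TRel (dec [:: 3]) false 0 2 false; TGen 3 0 true; TGen 4 2 true]);
       (9, 0, [:: TGen 4 2 false; TRel (dec [:: 2]) false 0 2 false; TGen 2 0 true; TGen 9 2 true]);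
       (6, 2, [:: TGen 4 1 false; TGen 4 2 false; TRel (dec [:: 2]) true 1 0 false; TGen 1 1 true; TGen 5 2 true; TGen 6 1 true]);
       (4, 3, [:: ]);
       (15, 1, [:: TRel (dec [:: 2; 4; 7]) false 1 3 true; TGen 4 3 true; TGen 4 1 true; TGen 4 3 false]);
       (13, 3, [:: ]);
       (13, 2, [:: TGen 13 3 false; TGen 4 2 false; TRel (dec [:: 2]) true 2 0 true; TGen 3 3 true; TGen 4 2 true; TGen 13 3 true]);
       (13, 1, [:: TGen 13 3 false; TRel (dec [:: 2; 4]) false 1 3 false; TGen 4 1 true; TGen 13 3 true]);
       (5, 1, [:: ]);
       (14, 0, [:: TRel (dec [:: 3; 4; 3]) true 0 0 true; TGen 5 1 true; TGen 4 0 true; TGen 4 1 true; TGen 4 0 false; TGen 5 1 false]);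
       (14, 2, [:: TRel (dec [:: 3; 4; 3]) true 1 0 false; TGen 5 1 true; TGen 8 2 true; TGen 8 1 true; TGen 8 2 false; TGen 5 1 false]);
       (14, 1, [:: TRel (dec [:: 2; 5]) true 0 0 false; TGen 12 0 true; TGen 9 1 true; TGen 5 0 true; TGen 5 1 false; TGen 14 0 false]);
       (5, 3, [:: ]);
       (15, 0, [:: TRel (dec [:: 3; 4; 7]) false 0 3 true; TGen 5 3 true; TGen 4 0 true; TGen 4 3 false]);
       (7, 3, [:: ]);
       (7, 2, [:: TGen 7 3 false; TGen 5 2 false; TRel (dec [:: 3]) true 2 0 true; TGen 1 3 true; TGen 5 2 true; TGen 7 3 true]);
       (13, 0, [:: TGen 7 3 false; TRel (dec [:: 3; 4]) false 0 3 false; TGen 4 0 true; TGen 13 3 true]);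
       (6, 3, [:: ]);
       (21, 1, [:: TRel (dec [:: 3; 4; 7]) false 1 3 true; TGen 5 3 true; TGen 6 1 true; TGen 6 3 false]);
       (21, 2, [:: TRel (dec [:: 2; 5; 7]) true 2 0 true; TGen 6 3 true; TGen 3 2 true; TGen 3 3 true; TGen 3 2 false; TGen 6 3 false]);
       (16, 3, [:: ]);
       (16, 1, [:: TGen 7 3 false; TRel (dec [:: 3; 4]) false 1 3 false; TGen 6 1 true; TGen 16 3 true]);
       (15, 2, [:: TGen 16 3 false; TRel (dec [:: 2; 5]) true 2 0 false; TGen 3 2 true; TGen 3 3 true; TGen 4 2 true; TGen 4 3 false]);
       (15, 3, [:: TGen 13 2 false; TGen 13 3 false; TRel (dec [:: 2; 4]) true 2 0 false; TGen 6 2 true; TGen 16 3 true; TGen 15 2 true]);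
       (17, 3, [:: TRel (dec [:: 3; 4; 6]) false 0 3 false; TGen 13 0 true; TGen 15 3 true; TGen 15 0 false]);
       (21, 3, [:: TGen 16 1 false; TRel (dec [:: 3; 4; 6]) false 1 3 true; TGen 17 3 true; TGen 21 1 true]);
       (7, 0, [:: ]);
       (11, 3, [:: TRel (dec [:: 3; 1; 4]) false 0 3 false; TGen 5 0 true; TGen 7 3 true; TGen 7 0 false]);
       (11, 0, [:: TGen 13 3 false; TRel (dec [:: 2; 4]) false 0 3 false; TGen 9 0 true; TGen 11 3 true]);
       (11, 2, [:: TGen 11 0 false; TRel (dec [:: 2; 4; 6]) false 0 2 true; TGen 13 2 true; TGen 11 0 true]);
       (7, 1, [:: ]);
       (20, 3, [:: TRel (dec [:: 3; 4; 3]) false 1 3 false; TGen 5 1 true; TGen 7 3 true; TGen 7 1 false]);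
       (20, 0, [:: TRel (dec [:: 3; 4; 6; 3]) true 0 0 true; TGen 7 1 true; TGen 13 0 true; TGen 13 1 true; TGen 13 0 false; TGen 7 1 false]);
       (20, 1, [:: TGen 16 3 false; TRel (dec [:: 2; 5]) false 1 3 false; TGen 14 1 true; TGen 20 3 true]);
       (8, 3, [:: ]);
       (21, 0, [:: TRel (dec [:: 3; 5; 7]) false 0 3 true; TGen 8 3 true; TGen 6 0 true; TGen 6 3 false]);
       (23, 1, [:: TRel (dec [:: 3; 5; 7]) false 1 3 true; TGen 8 3 true; TGen 8 1 true; TGen 8 3 false]);
       (23, 2, [:: TRel (dec [:: 3; 5; 7]) true 2 0 true; TGen 8 3 true; TGen 1 2 true; TGen 1 3 true; TGen 1 2 false; TGen 8 3 false]);
       (18, 3, [:: ]);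
       (16, 0, [:: TGen 18 3 false; TRel (dec [:: 3; 5]) false 0 3 false; TGen 6 0 true; TGen 16 3 true]);
       (18, 1, [:: TGen 18 3 false; TRel (dec [:: 3; 5]) false 1 3 false; TGen 8 1 true; TGen 18 3 true]);
       (17, 2, [:: TGen 18 3 false; TRel (dec [:: 3; 5]) true 2 0 false; TGen 1 2 true; TGen 1 3 true; TGen 5 2 true; TGen 5 3 false]);
       (23, 3, [:: TRel (dec [:: 3; 5; 6]) false 0 3 false; TGen 16 0 true; TGen 21 3 true; TGen 21 0 false]);
       (10, 1, [:: ]);
       (10, 2, [:: TGen 10 1 false; TGen 9 2 false; TRel (dec [:: 3; 1]) true 1 0 false; TGen 2 1 true; TGen 9 2 true; TGen 10 1 true]);
       (12, 1, [:: TGen 10 2 false; TGen 10 1 false; TRel (dec [:: 3; 1; 4]) true 1 0 true; TGen 12 2 true; TGen 9 1 true; TGen 12 2 true]);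
       (10, 0, [:: TGen 10 1 false; TGen 9 0 false; TRel (dec [:: 2; 4]) true 0 0 true; TGen 4 1 true; TGen 9 0 true; TGen 10 1 true]);
       (9, 3, [:: ]);
       (25, 0, [:: TRel (dec [:: 2; 4; 7]) false 0 3 true; TGen 4 3 true; TGen 9 0 true; TGen 9 3 false]);
       (17, 0, [:: TGen 25 0 false; TConj (dec [:: 2; 4; 7]) true; TGen 15 0 false]);
       (25, 3, [:: TGen 11 0 false; TRel (dec [:: 2; 4; 6]) false 0 3 true; TGen 15 3 true; TGen 25 0 true]);
       (10, 3, [:: ]);
       (27, 1, [:: TRel (dec [:: 3; 1; 4; 7]) false 1 3 true; TGen 9 3 true; TGen 10 1 true; TGen 10 3 false]);
       (27, 0, [:: TRel (dec [:: 3; 1; 4; 2; 7]) false 0 3 true; TGen 10 3 true; TGen 10 0 true; TGen 10 3 false]);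
       (24, 3, [:: ]);
       (24, 1, [:: TGen 11 3 false; TRel (dec [:: 3; 1; 4]) false 1 3 false; TGen 10 1 true; TGen 24 3 true]);
       (24, 0, [:: TGen 24 1 false; TGen 11 0 false; TRel (dec [:: 2; 4; 6]) true 0 0 true; TGen 13 1 true; TGen 11 0 true; TGen 24 1 true]);
       (27, 3, [:: TGen 24 1 false; TRel (dec [:: 3; 4; 6; 1]) false 1 3 true; TGen 25 3 true; TGen 27 1 true]);
       (11, 1, [:: ]);
       (19, 3, [:: TRel (dec [:: 3; 1; 5]) false 1 3 false; TGen 9 1 true; TGen 11 3 true; TGen 11 1 false]);
       (25, 2, [:: TGen 19 3 false; TRel (dec [:: 3; 1; 5]) true 2 0 false; TGen 2 2 true; TGen 2 3 true; TGen 9 2 true; TGen 9 3 false]);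
       (19, 0, [:: TGen 16 3 false; TRel (dec [:: 2; 5]) false 0 3 false; TGen 12 0 true; TGen 19 3 true]);
       (18, 0, [:: TGen 19 0 false; TConj (dec [:: 2; 5; 6]) true; TGen 16 0 false]);
       (19, 1, [:: TGen 24 0 false; TGen 24 1 false; TRel (dec [:: 3; 4; 6; 1]) true 0 0 false; TGen 7 0 true; TGen 16 1 true; TGen 19 0 true]);
       (24, 2, [:: TGen 27 1 false; TGen 25 2 false; TRel (dec [:: 3; 4; 6; 1; 3]) true 1 0 false; TGen 11 1 true; TGen 11 2 true; TGen 24 1 true]);
       (12, 3, [:: ]);
       (29, 0, [:: TRel (dec [:: 2; 5; 7]) false 0 3 true; TGen 6 3 true; TGen 12 0 true; TGen 12 3 false]);
       (23, 0, [:: TGen 29 0 false; TConj (dec [:: 2; 5; 7]) true; TGen 21 0 false]);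
       (29, 3, [:: TGen 19 0 false; TRel (dec [:: 2; 5; 6]) false 0 3 true; TGen 21 3 true; TGen 29 0 true]);
       (29, 1, [:: TGen 27 0 false; TGen 27 1 false; TRel (dec [:: 3; 1; 4; 7]) true 0 0 false; TGen 17 0 true; TGen 21 1 true; TGen 29 0 true]);
       (25, 1, [:: TGen 29 3 false; TRel (dec [:: 3; 4; 6; 1; 3]) false 1 3 false; TGen 11 1 true; TGen 25 3 true]);
       (29, 2, [:: TGen 29 3 false; TRel (dec [:: 3; 4; 6; 1; 3]) true 2 0 false; TGen 25 2 true; TGen 9 3 true; TGen 12 2 true; TGen 12 3 false]);
       (14, 3, [:: ]);
       (32, 1, [:: TRel (dec [:: 2; 5; 7]) false 1 3 true; TGen 6 3 true; TGen 14 1 true; TGen 14 3 false]);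
       (32, 3, [:: TGen 20 1 false; TRel (dec [:: 2; 5; 6]) false 1 3 true; TGen 21 3 true; TGen 32 1 true]);
       (32, 0, [:: TGen 32 3 false; TRel (dec [:: 3; 4; 6; 3]) false 0 3 false; TGen 20 0 true; TGen 32 3 true]);
       (17, 1, [:: TGen 32 3 false; TRel (dec [:: 3; 4; 6; 3]) false 1 3 false; TGen 7 1 true; TGen 17 3 true]);
       (30, 2, [:: ]);
       (30, 3, [:: TGen 30 2 false; TGen 15 3 false; TRel (dec [:: 2; 4; 6]) true 2 0 false; TGen 13 2 true; TGen 15 3 true; TGen 30 2 true]);
       (16, 2, [:: TGen 30 3 false; TGen 30 2 false; TRel (dec [:: 2; 4; 7]) true 2 0 true; TGen 4 3 true; TGen 6 2 true; TGen 16 3 true]);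
       (22, 2, [:: ]);
       (30, 0, [:: TGen 22 2 false; TRel (dec [:: 3; 4; 7]) false 0 2 false; TGen 15 0 true; TGen 30 2 true]);
       (22, 3, [:: TGen 22 2 false; TGen 17 3 false; TRel (dec [:: 3; 4; 6]) true 2 0 false; TGen 7 2 true; TGen 17 3 true; TGen 22 2 true]);
       (18, 2, [:: TRel (dec [:: 3; 4; 7; 4]) false 0 2 false; TGen 30 0 true; TGen 16 2 true; TGen 16 0 false]);
       (19, 2, [:: ]);
       (28, 0, [:: TRel (dec [:: 2; 4; 7; 4]) false 0 2 true; TGen 16 2 true; TGen 19 0 true; TGen 19 2 false]);
       (28, 3, [:: TGen 28 0 false; TRel (dec [:: 2; 4; 7; 4]) false 0 3 true; TGen 30 3 true; TGen 28 0 true]);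
       (22, 0, [:: TGen 28 0 false; TConj (dec [:: 2; 4; 7; 4]) true; TGen 30 0 false]);
       (28, 1, [:: TRel (dec [:: 3; 4; 6; 1; 3; 5]) true 1 0 true; TGen 19 2 true; TGen 11 1 true; TGen 11 2 true; TGen 11 1 false; TGen 19 2 false]);
       (28, 2, [:: TGen 25 0 false; TRel (dec [:: 2; 4; 7]) false 0 2 true; TGen 30 2 true; TGen 28 0 true]);
       (20, 2, [:: ]);
       (36, 0, [:: TRel (dec [:: 3; 4; 6; 3; 5]) false 0 2 true; TGen 20 2 true; TGen 20 0 true; TGen 20 2 false]);
       (36, 1, [:: TRel (dec [:: 3; 4; 6; 3; 5]) true 1 0 true; TGen 20 2 true; TGen 7 1 true; TGen 7 2 true; TGen 7 1 false; TGen 20 2 false]);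
       (31, 2, [:: ]);
       (31, 3, [:: TGen 31 2 false; TGen 20 3 false; TRel (dec [:: 3; 4; 3]) true 2 0 false; TGen 14 2 true; TGen 20 3 true; TGen 31 2 true]);
       (30, 1, [:: TGen 31 2 false; TGen 20 1 false; TRel (dec [:: 2; 5; 6]) true 1 0 true; TGen 15 2 true; TGen 15 1 true; TGen 30 2 true]);
       (31, 0, [:: TGen 31 2 false; TRel (dec [:: 3; 4; 6; 3]) false 0 2 false; TGen 20 0 true; TGen 31 2 true]);
       (36, 2, [:: TRel (dec [:: 3; 4; 6; 3; 4]) true 1 0 false; TGen 30 1 true; TGen 16 2 true; TGen 20 1 true; TGen 20 2 false; TGen 36 1 false]);
       (22, 1, [:: ]);
       (37, 3, [:: TRel (dec [:: 3; 4; 7; 4; 3]) false 1 3 false; TGen 22 1 true; TGen 22 3 true; TGen 22 1 false]);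
       (37, 2, [:: TRel (dec [:: 3; 4; 7; 4; 3]) true 1 0 false; TGen 22 1 true; TGen 18 2 true; TGen 18 1 true; TGen 18 2 false; TGen 22 1 false]);
       (34, 1, [:: ]);
       (32, 2, [:: TGen 34 1 false; TGen 22 2 false; TRel (dec [:: 3; 4; 7]) true 1 0 false; TGen 21 1 true; TGen 21 2 true; TGen 32 1 true]);
       (34, 3, [:: TGen 34 1 false; TRel (dec [:: 3; 4; 7; 4]) false 1 3 true; TGen 22 3 true; TGen 34 1 true]);
       (34, 0, [:: TGen 34 1 false; TGen 22 0 false; TRel (dec [:: 3; 4; 6; 1; 3; 5]) true 0 0 true; TGen 28 1 true; TGen 22 0 true; TGen 34 1 true]);
       (37, 1, [:: TRel (dec [:: 3; 4; 7; 4; 2]) true 1 0 true; TGen 32 2 true; TGen 17 1 true; TGen 22 2 true; TGen 22 1 false; TGen 37 2 false]);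
       (26, 2, [:: ]);
       (26, 1, [:: TGen 26 2 false; TGen 24 1 false; TRel (dec [:: 3; 4; 6; 1]) true 1 0 true; TGen 11 2 true; TGen 24 1 true; TGen 26 2 true]);
       (26, 3, [:: TGen 26 2 false; TGen 24 3 false; TRel (dec [:: 3; 1; 4; 2]) true 2 0 false; TGen 10 2 true; TGen 24 3 true; TGen 26 2 true]);
       (26, 0, [:: TGen 26 2 false; TRel (dec [:: 3; 1; 4; 2; 6]) false 0 2 false; TGen 24 0 true; TGen 26 2 true]);
       (27, 2, [:: TGen 26 1 false; TGen 26 2 false; TRel (dec [:: 3; 1; 4; 2; 6]) true 1 0 false; TGen 19 1 true; TGen 25 2 true; TGen 27 1 true]);
       (33, 1, [:: ]);
       (33, 2, [:: TGen 33 1 false; TGen 30 2 false; TRel (dec [:: 2; 4; 7]) true 1 0 false; TGen 15 1 true; TGen 30 2 true; TGen 33 1 true]);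
       (33, 3, [:: TGen 33 1 false; TRel (dec [:: 2; 4; 7; 4]) false 1 3 true; TGen 30 3 true; TGen 33 1 true]);
       (37, 0, [:: TGen 33 1 false; TRel (dec [:: 2; 4; 7; 4]) true 0 0 false; TGen 28 0 true; TGen 28 1 true; TGen 22 0 true; TGen 22 1 false]);
       (31, 1, [:: TGen 33 2 false; TGen 33 1 false; TRel (dec [:: 2; 4; 7; 4]) true 1 0 true; TGen 16 2 true; TGen 20 1 true; TGen 31 2 true]);
       (35, 2, [:: ]);
       (35, 1, [:: TGen 35 2 false; TGen 32 1 false; TRel (dec [:: 2; 5; 7]) true 1 0 true; TGen 21 2 true; TGen 32 1 true; TGen 35 2 true]);
       (36, 3, [:: TGen 35 2 false; TGen 32 3 false; TRel (dec [:: 3; 4; 6; 3]) true 2 0 false; TGen 31 2 true; TGen 31 3 true; TGen 36 2 true]);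
       (35, 0, [:: TGen 35 2 false; TRel (dec [:: 3; 4; 3; 7]) false 0 2 false; TGen 32 0 true; TGen 35 2 true]);
       (34, 2, [:: TGen 35 1 false; TGen 35 2 false; TRel (dec [:: 3; 4; 3; 7]) true 1 0 false; TGen 17 1 true; TGen 22 2 true; TGen 34 1 true]);
       (33, 0, [:: ]);
       (39, 0, [:: TConj (dec [:: 3; 4; 7; 4; 3]) true; TGen 37 0 false; TGen 33 0 false]);
       (39, 1, [:: TGen 39 0 false; TGen 37 1 false; TRel (dec [:: 3; 4; 7; 4; 2]) true 0 0 false; TGen 34 0 true; TGen 37 1 true; TGen 39 0 true]);
       (39, 2, [:: TRel (dec [:: 2; 4; 7; 4; 2; 1]) false 0 2 false; TGen 33 0 true; TGen 33 2 true; TGen 33 0 false]);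
       (39, 3, [:: TRel (dec [:: 2; 4; 7; 4; 2; 1]) false 0 3 false; TGen 33 0 true; TGen 33 3 true; TGen 33 0 false]);
       (35, 3, [:: ]);
       (38, 0, [:: TRel (dec [:: 3; 4; 3; 7; 4; 7]) false 0 3 true; TGen 35 3 true; TGen 35 0 true; TGen 35 3 false]);
       (38, 1, [:: TRel (dec [:: 3; 4; 3; 7; 4; 7]) false 1 3 true; TGen 35 3 true; TGen 35 1 true; TGen 35 3 false]);
       (38, 2, [:: TRel (dec [:: 3; 4; 3; 7; 4; 7]) true 2 0 true; TGen 35 3 true; TGen 34 2 true; TGen 34 3 true; TGen 34 2 false; TGen 35 3 false]);
       (38, 3, [:: TRel (dec [:: 3; 4; 6; 3; 5]) true 2 0 false; TGen 20 2 true; TGen 32 3 true; TGen 35 2 true; TGen 35 3 false; TGen 38 2 false])] |}.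

Definition certificate_of (n m r : nat) : option certificate :=
  match n, m, r with
  | 3, 3, 4 => Some cert_3_3
  | 3, 4, 6 => Some cert_3_4
  | 3, 5, 12 => Some cert_3_5
  | 4, 3, 12 => Some cert_4_3
  | 5, 3, 40 => Some cert_5_3
  | _, _, _ => None
  end%N.

Lemma certificates_ok :
  all (fun '(n, m, r) => if certificate_of n m r is Some c then certificate_ok n m r c else false)
      [:: (3, 3, 4); (3, 4, 6); (3, 5, 12); (4, 3, 12); (5, 3, 40)]%N.
Proof. by vm_compute. Qed.

Local Close Scope ring_scope.

Theorem theorem4p1 (n m r : nat) :
  (n, m, r) \in [:: (3, 3, 4); (3, 4, 6); (3, 5, 12); (4, 3, 12); (5, 3, 40)]%N ->
  H1_normal_closure_free_of_rank n m r.
Proof.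
move=> /(allP certificates_ok) /=; case: certificate_of => // c.
exact: H1_free_of_certificate.
Qed.
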